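(* Let $\mathcal T=(T_1,\dots,T_n)\in B(H)^n$. Then $$\bigcup_{\mathcal K\in\mathcal K(H)^n}\mathcal D_{\rm const}(\mathcal T+\mathcal K)=W_{\rm e}(\mathcal T).$$
   Context: $H$ is an infinite-dimensional complex separable Hilbert space and $\mathcal K(H)$ the compact operators on $H$; for $\mathcal K=(K_1,\dots,K_n)$, $\mathcal T+\mathcal K=(T_1+K_1,\dots,T_n+K_n)$. $W_{\rm e}(\mathcal T)$ is the set of $\lambda\in\mathbb C^n$ such that $\langle T_jx_k,x_k\rangle\to\lambda_j$ for all $j$ for some orthonormal sequence $(x_k)$. $\mathcal D_{\rm const}(\mathcal T)$ is the set of $\lambda\in\mathbb C^n$ for which there is an orthonormal basis $(u_k)$ of $H$ with $\langle T_ju_k,u_k\rangle=\lambda_j$ for all $k$ and $j$. *)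

From Stdlib Require Import Reals.
From Stdlib Require Fin.
Open Scope R_scope.
Set Implicit Arguments.

Record complex := mkC { Re : R; Im : R }.
Definition C0 : complex := mkC 0 0.
Definition C1 : complex := mkC 1 0.
Definition Cadd (a b : complex) : complex := mkC (Re a + Re b) (Im a + Im b).
Definition Copp (a : complex) : complex := mkC (- Re a) (- Im a).
Definition Csub (a b : complex) : complex := Cadd a (Copp b).
Definition Cmul (a b : complex) : complex :=
  mkC (Re a * Re b - Im a * Im b) (Re a * Im b + Im a * Re b).
Definition Cconj (a : complex) : complex := mkC (Re a) (- Im a).
Definition Cmod (a : complex) : R := sqrt (Re a * Re a + Im a * Im a).

Definition Ccv (u : nat -> complex) (l : complex) : Prop :=
  Un_cv (fun k => Cmod (Csub (u k) l)) 0.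

(** * Complex Hilbert spaces (inner product linear in the first slot) *)
Record CHilbertSpace := {
  hs :> Type;
  hzero : hs;
  hadd : hs -> hs -> hs;
  hopp : hs -> hs;
  hscal : complex -> hs -> hs;
  hinner : hs -> hs -> complex;
  hadd_assoc : forall x y z, hadd x (hadd y z) = hadd (hadd x y) z;
  hadd_comm : forall x y, hadd x y = hadd y x;
  hadd_0 : forall x, hadd x hzero = x;
  hadd_opp : forall x, hadd x (hopp x) = hzero;
  hscal_1 : forall x, hscal C1 x = x;
  hscal_assoc : forall a b x, hscal a (hscal b x) = hscal (Cmul a b) x;
  hscal_distr_v : forall a x y, hscal a (hadd x y) = hadd (hscal a x) (hscal a y);
  hscal_distr_s : forall a b x, hscal (Cadd a b) x = hadd (hscal a x) (hscal b x);
  hinner_add_l : forall x y z, hinner (hadd x y) z = Cadd (hinner x z) (hinner y z);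
  hinner_scal_l : forall a x y, hinner (hscal a x) y = Cmul a (hinner x y);
  hinner_conj : forall x y, hinner y x = Cconj (hinner x y);
  hinner_pos : forall x, 0 <= Re (hinner x x);
  hinner_def : forall x, hinner x x = C0 -> x = hzero;
  hcomplete : forall u : nat -> hs,
    (forall eps, eps > 0 -> exists N, forall m p, (m >= N)%nat -> (p >= N)%nat ->
        sqrt (Re (hinner (hadd (u m) (hopp (u p))) (hadd (u m) (hopp (u p))))) < eps) ->
    exists l, Un_cv (fun k =>
        sqrt (Re (hinner (hadd (u k) (hopp l)) (hadd (u k) (hopp l))))) 0
}.

Arguments hzero {c}.
Arguments hadd {c} _ _.
Arguments hopp {c} _.
Arguments hscal {c} _ _.
Arguments hinner {c} _ _.

Section HS.
Variable H : CHilbertSpace.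

Definition hsub (x y : H) : H := hadd x (hopp y).
Definition hnorm (x : H) : R := sqrt (Re (hinner x x)).

Fixpoint lincomb (c : nat -> complex) (v : nat -> H) (m : nat) : H :=
  match m with
  | O => @hzero H
  | S m' => hadd (lincomb c v m') (hscal (c m') (v m'))
  end.

Definition infinite_dimensional : Prop :=
  forall m : nat, exists v : nat -> H,
    forall c : nat -> complex, lincomb c v m = @hzero H ->
      forall i, (i < m)%nat -> c i = C0.

Definition separable : Prop :=
  exists d : nat -> H, forall x eps, eps > 0 -> exists k, hnorm (hsub x (d k)) < eps.

Definition linear_op (T : H -> H) : Prop :=
  (forall x y, T (hadd x y) = hadd (T x) (T y)) /\
  (forall a x, T (hscal a x) = hscal a (T x)).

Definition bounded_op (T : H -> H) : Prop :=
  linear_op T /\ exists M, forall x, hnorm (T x) <= M * hnorm x.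

Definition hcv (u : nat -> H) (l : H) : Prop :=
  Un_cv (fun k => hnorm (hsub (u k) l)) 0.

(** K in K(H): linear, and maps bounded sequences to sequences having a
    convergent subsequence (i.e. bounded sets to relatively compact sets) *)
Definition compact_op (K : H -> H) : Prop :=
  linear_op K /\
  forall u : nat -> H, (exists M, forall k, hnorm (u k) <= M) ->
    exists phi : nat -> nat, (forall k, (phi k < phi (S k))%nat) /\
      exists l, hcv (fun k => K (u (phi k))) l.

Definition orthonormal (x : nat -> H) : Prop :=
  forall i j, hinner (x i) (x j) = if Nat.eqb i j then C1 else C0.

Definition orthonormal_basis (u : nat -> H) : Prop :=
  orthonormal u /\ forall y, (forall k, hinner y (u k) = C0) -> y = @hzero H.

Definition tuple_add (n : nat) (T K : Fin.t n -> H -> H) : Fin.t n -> H -> H :=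
  fun j x => hadd (T j x) (K j x).

Definition ess_num_range (n : nat) (T : Fin.t n -> H -> H) (lam : Fin.t n -> complex) : Prop :=
  exists x : nat -> H, orthonormal x /\
    forall j, Ccv (fun k => hinner (T j (x k)) (x k)) (lam j).

Definition D_const (n : nat) (T : Fin.t n -> H -> H) (lam : Fin.t n -> complex) : Prop :=
  exists u : nat -> H, orthonormal_basis u /\
    forall k j, hinner (T j (u k)) (u k) = lam j.

End HS.

Arguments hsub {H} _ _.
Arguments hnorm {H} _.
Arguments lincomb {H} _ _ _.
Arguments linear_op {H} _.
Arguments bounded_op {H} _.
Arguments hcv {H} _ _.
Arguments compact_op {H} _.
Arguments orthonormal {H} _.
Arguments orthonormal_basis {H} _.
Arguments tuple_add {H n} _ _ _ _.
Arguments ess_num_range {H n} _ _.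
Arguments D_const {H n} _ _.

(** One builds an orthonormal basis [u] of [H] in
    consecutive finite blocks, each new block being chosen orthogonal to the
    previous ones, so that every [d m] of a dense sequence eventually lies in the
    span, and such that [<T_j u_k, u_k>] tends to [lam_j].  A block consists of
    one "capturing" unit vector (a normalised residual of [d m]), whose diagonal
    values are only within [2 C] of [lam] ([C] bounding all [|T_j|] and [|lam_j|]),
    together with [N - 1] vectors close to terms
    of [x], which are almost orthogonal to everything in sight; mixing the block
    by an [N x N] Hadamard matrix spreads the bad contribution, so that every
    mixed vector has diagonal value within [O(1/N)] of [lam].  The diagonal
    operators [K_j u_k = (lam_j - <T_j u_k, u_k>) u_k] are compact since their
    eigenvalues tend to [0], and [u] lies in [D_const(T + K)].
    Conversely, a compact operator maps an orthonormal sequence to a null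
    sequence, so along a basis realising [D_const(T + K)] the diagonal values of
    [T] converge to the constants. *)

From Stdlib Require Import Reals Lra Lia Psatz Classical ClassicalEpsilon FunctionalExtensionality.
From Stdlib Require Fin.
Open Scope R_scope.

Lemma Ceq (a b : complex) : Re a = Re b -> Im a = Im b -> a = b.
Proof. destruct a, b; simpl; intros; subst; reflexivity. Qed.

Ltac cring := apply Ceq; simpl; ring.

Lemma Cmul_comm a b : Cmul a b = Cmul b a. Proof. cring. Qed.
Lemma Cmul_assoc a b c : Cmul a (Cmul b c) = Cmul (Cmul a b) c. Proof. cring. Qed.
Lemma Cmul_0_l a : Cmul C0 a = C0. Proof. cring. Qed.
Lemma Cmul_0_r a : Cmul a C0 = C0. Proof. cring. Qed.
Lemma Cconj_add a b : Cconj (Cadd a b) = Cadd (Cconj a) (Cconj b). Proof. cring. Qed.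
Lemma Cconj_mul a b : Cconj (Cmul a b) = Cmul (Cconj a) (Cconj b). Proof. cring. Qed.
Lemma Cconj_0 : Cconj C0 = C0. Proof. cring. Qed.
Lemma Csub_diag a : Csub a a = C0. Proof. cring. Qed.

Definition RtoC (r : R) : complex := mkC r 0.

Lemma RtoC_mul a b : Cmul (RtoC a) (RtoC b) = RtoC (a * b). Proof. cring. Qed.
Lemma RtoC_conj a : Cconj (RtoC a) = RtoC a. Proof. cring. Qed.

Lemma Cmod_sq a : Cmod a * Cmod a = Re a * Re a + Im a * Im a.
Proof. unfold Cmod. rewrite sqrt_sqrt; nra. Qed.

Lemma Cmod_ge_0 a : 0 <= Cmod a.
Proof. apply sqrt_pos. Qed.

Lemma Cmod_le_sq a r : 0 <= r -> Re a * Re a + Im a * Im a <= r * r -> Cmod a <= r.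
Proof. intros. unfold Cmod. rewrite <- (sqrt_square r) by lra. apply sqrt_le_1_alt. lra. Qed.

Lemma Cmod_mul a b : Cmod (Cmul a b) = Cmod a * Cmod b.
Proof. unfold Cmod. rewrite <- sqrt_mult by nra. f_equal. destruct a, b; simpl. ring. Qed.

Lemma Cmod_conj a : Cmod (Cconj a) = Cmod a.
Proof. unfold Cmod. destruct a; simpl. f_equal. ring. Qed.

Lemma Cmod_opp a : Cmod (Copp a) = Cmod a.
Proof. unfold Cmod; destruct a; simpl; apply f_equal; ring. Qed.

Lemma Cmod_0 : Cmod C0 = 0.
Proof. unfold Cmod; simpl. replace (0 * 0 + 0 * 0) with 0 by ring. apply sqrt_0. Qed.

Lemma Cmod_RtoC r : Cmod (RtoC r) = Rabs r.
Proof. unfold Cmod, RtoC; simpl. rewrite <- sqrt_Rsqr_abs. f_equal. unfold Rsqr; ring. Qed.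

Lemma Cmod_sub_sym a b : Cmod (Csub a b) = Cmod (Csub b a).
Proof. unfold Cmod; destruct a, b; simpl; apply f_equal; ring. Qed.

Lemma Rabs_le_sq x c : 0 <= c -> x * x <= c * c -> Rabs x <= c.
Proof. intros. unfold Rabs; destruct (Rcase_abs x); nra. Qed.

Lemma Re_le_Cmod a : Rabs (Re a) <= Cmod a.
Proof. pose proof (Cmod_sq a). pose proof (Cmod_ge_0 a). apply Rabs_le_sq; nra. Qed.

Lemma Im_le_Cmod a : Rabs (Im a) <= Cmod a.
Proof. pose proof (Cmod_sq a). pose proof (Cmod_ge_0 a). apply Rabs_le_sq; nra. Qed.

Lemma Cmod_le_ReIm a : Cmod a <= Rabs (Re a) + Rabs (Im a).
Proof.
  pose proof (Rabs_pos (Re a)); pose proof (Rabs_pos (Im a)).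
  apply Cmod_le_sq; [lra|].
  assert (Re a * Re a = Rabs (Re a) * Rabs (Re a)) by (rewrite <- Rabs_mult, Rabs_right; nra).
  assert (Im a * Im a = Rabs (Im a) * Rabs (Im a)) by (rewrite <- Rabs_mult, Rabs_right; nra).
  nra.
Qed.

Lemma Cmod_add a b : Cmod (Cadd a b) <= Cmod a + Cmod b.
Proof.
  pose proof (Cmod_sq a) as Ha; pose proof (Cmod_sq b) as Hb.
  pose proof (Cmod_ge_0 a) as Ga; pose proof (Cmod_ge_0 b) as Gb.
  apply Cmod_le_sq; [lra|].
  set (x := Cmod a) in *; set (y := Cmod b) in *; clearbody x y.
  destruct a as [p q], b as [r s]; simpl in *.
  (* Cauchy-Schwarz in R^2 *)
  assert (Dot : (p * r + q * s) * (p * r + q * s) <= (x * y) * (x * y)).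
  { replace ((x * y) * (x * y)) with ((x * x) * (y * y)) by ring. rewrite Ha, Hb.
    pose proof (Rle_0_sqr (p * s - q * r)). unfold Rsqr in *. nra. }
  assert (p * r + q * s <= x * y).
  { apply Rsqr_incr_0_var; [unfold Rsqr; lra | apply Rmult_le_pos; assumption]. }
  replace ((p + r) * (p + r) + (q + s) * (q + s)) with (x * x + y * y + 2 * (p * r + q * s))
    by (rewrite Ha, Hb; ring).
  nra.
Qed.

Lemma Cmod_sub_tri a b c : Cmod (Csub a c) <= Cmod (Csub a b) + Cmod (Csub b c).
Proof. replace (Csub a c) with (Cadd (Csub a b) (Csub b c)) by cring. apply Cmod_add. Qed.

(** * Elementary Hilbert space geometry *)

Section HilbertBasics.
Context {H : CHilbertSpace}.
Implicit Types x y z : H.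

Lemma hadd_0_l x : hadd hzero x = x.
Proof. rewrite hadd_comm. apply hadd_0. Qed.

Lemma hadd_cancel_l x y z : hadd x y = hadd x z -> y = z.
Proof.
  intros E. transitivity (hadd (hadd (hopp x) x) y).
  - rewrite (hadd_comm _ (hopp x) x), hadd_opp, hadd_0_l. reflexivity.
  - rewrite <- hadd_assoc, E, hadd_assoc, (hadd_comm _ (hopp x) x), hadd_opp, hadd_0_l.
    reflexivity.
Qed.

Lemma hadd_self_0 x : hadd x x = x -> x = hzero.
Proof. intros E. apply (hadd_cancel_l x). rewrite E, hadd_0. reflexivity. Qed.

Lemma hscal_0 x : hscal C0 x = hzero.
Proof. apply hadd_self_0. rewrite <- hscal_distr_s. f_equal. cring. Qed.

Lemma hscal_zero a : hscal a (@hzero H) = hzero.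
Proof. apply hadd_self_0. rewrite <- hscal_distr_v, hadd_0. reflexivity. Qed.

Lemma hopp_scal x : hopp x = hscal (RtoC (-1)) x.
Proof.
  apply (hadd_cancel_l x). rewrite hadd_opp.
  rewrite <- (hscal_1 _ x) at 1. rewrite <- hscal_distr_s.
  replace (Cadd C1 (RtoC (-1))) with C0 by cring. rewrite hscal_0. reflexivity.
Qed.

Lemma hinner_0_l y : hinner (@hzero H) y = C0.
Proof. rewrite <- (hscal_0 hzero), hinner_scal_l. apply Cmul_0_l. Qed.

Lemma hinner_0_r y : hinner y (@hzero H) = C0.
Proof. rewrite hinner_conj, hinner_0_l. apply Cconj_0. Qed.

Lemma hinner_add_r x y z : hinner x (hadd y z) = Cadd (hinner x y) (hinner x z).
Proof. rewrite hinner_conj, hinner_add_l, Cconj_add, <- !hinner_conj. reflexivity. Qed.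

Lemma hinner_scal_r a x y : hinner x (hscal a y) = Cmul (Cconj a) (hinner x y).
Proof. rewrite hinner_conj, hinner_scal_l, Cconj_mul, <- hinner_conj. reflexivity. Qed.

Lemma hinner_opp_l x y : hinner (hopp x) y = Copp (hinner x y).
Proof. rewrite hopp_scal, hinner_scal_l. cring. Qed.

Lemma hinner_opp_r x y : hinner x (hopp y) = Copp (hinner x y).
Proof. rewrite hopp_scal, hinner_scal_r. cring. Qed.

Lemma hinner_sub_l x y z : hinner (hsub x y) z = Csub (hinner x z) (hinner y z).
Proof. unfold hsub. rewrite hinner_add_l, hinner_opp_l. reflexivity. Qed.

Lemma hinner_sub_r x y z : hinner x (hsub y z) = Csub (hinner x y) (hinner x z).
Proof. unfold hsub. rewrite hinner_add_r, hinner_opp_r. reflexivity. Qed.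

Lemma Im_hinner_self x : Im (hinner x x) = 0.
Proof.
  pose proof (hinner_conj _ x x) as E. destruct (hinner x x) as [p q].
  unfold Cconj in E. simpl in *. injection E. lra.
Qed.

Lemma hinner_self_real x : hinner x x = RtoC (Re (hinner x x)).
Proof. apply Ceq; simpl; auto. apply Im_hinner_self. Qed.

Lemma hnorm_sq x : hnorm x * hnorm x = Re (hinner x x).
Proof. unfold hnorm. apply sqrt_sqrt. apply hinner_pos. Qed.

Lemma hnorm_unit x : hinner x x = C1 -> hnorm x = 1.
Proof. intros E. unfold hnorm. rewrite E. simpl. apply sqrt_1. Qed.

Lemma hnorm_pos x : 0 <= hnorm x.
Proof. apply sqrt_pos. Qed.

Lemma hnorm_eq_0 x : hnorm x = 0 -> x = hzero.
Proof.
  intros E. apply hinner_def. pose proof (hnorm_sq x) as Sq. rewrite E in Sq.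
  apply Ceq; simpl; [lra | apply Im_hinner_self].
Qed.

Lemma hnorm_0 : hnorm (@hzero H) = 0.
Proof. unfold hnorm. rewrite hinner_0_l. simpl. apply sqrt_0. Qed.

Lemma hnorm_le_sq x r : 0 <= r -> Re (hinner x x) <= r * r -> hnorm x <= r.
Proof. intros. unfold hnorm. rewrite <- (sqrt_square r) by lra. apply sqrt_le_1_alt. auto. Qed.

Lemma Re_hinner_add_scal x y a :
  Re (hinner (hadd x (hscal a y)) (hadd x (hscal a y))) =
  Re (hinner x x) + 2 * (Re a * Re (hinner y x) - Im a * Im (hinner y x))
  + (Re a * Re a + Im a * Im a) * Re (hinner y y).
Proof.
  rewrite !hinner_add_l, !hinner_add_r, !hinner_scal_l, !hinner_scal_r.
  rewrite (hinner_conj _ x y). pose proof (Im_hinner_self y) as Iy.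
  destruct (hinner y x) as [p q]; destruct a as [s t]; destruct (hinner y y) as [r w].
  simpl in *. rewrite Iy. ring.
Qed.

Lemma cauchy_schwarz_sq x y :
  Cmod (hinner x y) * Cmod (hinner x y) <= Re (hinner x x) * Re (hinner y y).
Proof.
  rewrite Cmod_sq.
  pose proof (hinner_pos _ y) as Py. pose proof (hinner_pos _ x) as Px.
  destruct (Req_dec (Re (hinner y y)) 0) as [Z|NZ].
  - assert (y = hzero) as ->.
    { apply hinner_def. apply Ceq; simpl; auto. apply Im_hinner_self. }
    rewrite hinner_0_r. simpl. nra.
  - set (N := Re (hinner y y)) in *.
    (* positivity of |x + a y|^2 for the minimising a = - <y,x>^* / |y|^2 *)
    pose proof (hinner_pos _ (hadd x (hscal (mkC (- Re (hinner y x) / N) (Im (hinner y x) / N)) y)))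
      as P.
    rewrite Re_hinner_add_scal in P. simpl in P. fold N in P.
    rewrite (hinner_conj _ y x). simpl.
    set (p := Re (hinner y x)) in *. set (q := Im (hinner y x)) in *.
    assert (0 <= Re (hinner x x) * N - (p * p + q * q)).
    { replace (Re (hinner x x) * N - (p * p + q * q)) with
        (N * (Re (hinner x x) + 2 * (- p / N * p - q / N * q)
              + (- p / N * (- p / N) + q / N * (q / N)) * N)) by (field; lra).
      apply Rmult_le_pos; lra. }
    nra.
Qed.

Lemma cauchy_schwarz x y : Cmod (hinner x y) <= hnorm x * hnorm y.
Proof.
  apply Rsqr_incr_0_var.
  - unfold Rsqr. replace (hnorm x * hnorm y * (hnorm x * hnorm y))
      with (hnorm x * hnorm x * (hnorm y * hnorm y)) by ring.
    rewrite !hnorm_sq. apply cauchy_schwarz_sq.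
  - apply Rmult_le_pos; apply hnorm_pos.
Qed.

Lemma hnorm_add x y : hnorm (hadd x y) <= hnorm x + hnorm y.
Proof.
  pose proof (hnorm_pos x); pose proof (hnorm_pos y).
  apply hnorm_le_sq; [lra|].
  rewrite <- (hscal_1 _ y) at 1 2. rewrite Re_hinner_add_scal. simpl.
  pose proof (cauchy_schwarz y x). pose proof (Re_le_Cmod (hinner y x)).
  pose proof (Rle_abs (Re (hinner y x))).
  rewrite <- !hnorm_sq. nra.
Qed.

Lemma hnorm_scal a x : hnorm (hscal a x) = Cmod a * hnorm x.
Proof.
  unfold hnorm, Cmod. rewrite <- sqrt_mult; [| nra | apply hinner_pos]. f_equal.
  rewrite hinner_scal_l, hinner_scal_r. pose proof (Im_hinner_self x).
  destruct a as [s t]; destruct (hinner x x) as [r w]; simpl in *. subst. ring.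
Qed.

Lemma hnorm_opp x : hnorm (hopp x) = hnorm x.
Proof. rewrite hopp_scal, hnorm_scal, Cmod_RtoC, Rabs_left by lra. ring. Qed.

Lemma hopp_add x y : hopp (hadd x y) = hadd (hopp x) (hopp y).
Proof. rewrite !hopp_scal. apply hscal_distr_v. Qed.

Lemma hopp_opp x : hopp (hopp x) = x.
Proof.
  rewrite !hopp_scal, hscal_assoc. replace (Cmul (RtoC (-1)) (RtoC (-1))) with C1 by cring.
  apply hscal_1.
Qed.

Lemma hnorm_sub_sym x y : hnorm (hsub x y) = hnorm (hsub y x).
Proof. rewrite <- hnorm_opp. unfold hsub. rewrite hopp_add, hopp_opp, hadd_comm. reflexivity. Qed.

Lemma hsub_add x y z : hadd (hsub x y) (hsub y z) = hsub x z.
Proof.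
  unfold hsub. rewrite <- hadd_assoc, (hadd_assoc _ (hopp y)), (hadd_comm _ (hopp y) y),
    hadd_opp, hadd_0_l. reflexivity.
Qed.

Lemma hnorm_sub_tri x y z : hnorm (hsub x z) <= hnorm (hsub x y) + hnorm (hsub y z).
Proof. rewrite <- (hsub_add x y z). apply hnorm_add. Qed.

Lemma hsub_diag x : hsub x x = hzero.
Proof. apply hadd_opp. Qed.

Lemma hsub_0 x : hsub x hzero = x.
Proof. unfold hsub. rewrite hopp_scal, hscal_zero. apply hadd_0. Qed.

Lemma hnorm_sub_ge x y : hnorm x - hnorm y <= hnorm (hsub x y).
Proof. pose proof (hnorm_sub_tri x y hzero) as Tri. rewrite !hsub_0 in Tri. lra. Qed.

Lemma hadd_sub_cancel x y : hadd y (hsub x y) = x.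
Proof.
  unfold hsub. rewrite hadd_comm, <- hadd_assoc, (hadd_comm _ (hopp y)), hadd_opp, hadd_0.
  reflexivity.
Qed.

Lemma hsub_add_cancel x y : hadd (hsub x y) y = x.
Proof. rewrite hadd_comm. apply hadd_sub_cancel. Qed.

Lemma hsub_eq_0 x y : hsub x y = hzero -> x = y.
Proof. intros E. rewrite <- (hsub_add_cancel x y), E, hadd_0_l. reflexivity. Qed.

Lemma hinner_ext x y : (forall z, hinner x z = hinner y z) -> x = y.
Proof.
  intros E. apply hsub_eq_0, hinner_def. rewrite hinner_sub_l, E. apply Csub_diag.
Qed.

Lemma pythagoras x y : hinner x y = C0 ->
  Re (hinner (hadd x y) (hadd x y)) = Re (hinner x x) + Re (hinner y y).
Proof.
  intros Z. rewrite <- (hscal_1 _ y) at 1 2. rewrite Re_hinner_add_scal. simpl.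
  rewrite (hinner_conj _ x y), Z. simpl. ring.
Qed.

Lemma linear_op_zero (K : H -> H) : linear_op K -> K hzero = hzero.
Proof. intros [_ Hs]. rewrite <- (hscal_0 hzero), Hs, !hscal_0. reflexivity. Qed.

End HilbertBasics.

Ltac hvec := apply hinner_ext; intro;
  repeat rewrite ?hinner_add_l, ?hinner_sub_l, ?hinner_scal_l, ?hinner_opp_l, ?hinner_0_l;
  cring.

Fixpoint Csum (f : nat -> complex) (n : nat) : complex :=
  match n with O => C0 | S m => Cadd (Csum f m) (f m) end.

Fixpoint Rsum (f : nat -> R) (n : nat) : R :=
  match n with O => 0 | S m => Rsum f m + f m end.

Lemma Csum_ext f g n : (forall i, (i < n)%nat -> f i = g i) -> Csum f n = Csum g n.
Proof.
  induction n; simpl; intros E; auto.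
  rewrite IHn by (intros; apply E; lia). rewrite E by lia. reflexivity.
Qed.

Lemma Rsum_ext f g n : (forall i, (i < n)%nat -> f i = g i) -> Rsum f n = Rsum g n.
Proof.
  induction n; simpl; intros E; auto.
  rewrite IHn by (intros; apply E; lia). rewrite E by lia. reflexivity.
Qed.

Lemma Rsum_le f g n : (forall i, (i < n)%nat -> f i <= g i) -> Rsum f n <= Rsum g n.
Proof.
  induction n; simpl; intros E; [lra|].
  pose proof (E n ltac:(lia)). pose proof (IHn ltac:(intros; apply E; lia)). lra.
Qed.

Lemma Rsum_nonneg f n : (forall i, (i < n)%nat -> 0 <= f i) -> 0 <= Rsum f n.
Proof.
  induction n; simpl; intros E; [lra|].
  pose proof (E n ltac:(lia)). pose proof (IHn ltac:(intros; apply E; lia)). lra.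
Qed.

Lemma Rsum_const c n : Rsum (fun _ => c) n = INR n * c.
Proof. induction n; simpl Rsum; [simpl; ring|]. rewrite IHn, S_INR. ring. Qed.

Lemma Rsum_scal c f n : Rsum (fun i => c * f i) n = c * Rsum f n.
Proof. induction n; simpl; [ring|]. rewrite IHn; ring. Qed.

Lemma Rsum_add f g n : Rsum (fun i => f i + g i) n = Rsum f n + Rsum g n.
Proof. induction n; simpl; [ring|]. rewrite IHn; ring. Qed.

Lemma Rsum_split f n m : Rsum f (n + m) = Rsum f n + Rsum (fun i => f (n + i)%nat) m.
Proof.
  induction m; simpl; [rewrite Nat.add_0_r; ring|].
  rewrite Nat.add_succ_r. simpl. rewrite IHm. ring.
Qed.

Lemma Rsum_delta0 c n : (0 < n)%nat -> Rsum (fun b => if Nat.eqb b 0 then c else 0) n = c.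
Proof.
  induction n as [|[|n] IH]; intros Hn; [lia | simpl; ring |].
  simpl Rsum. simpl Rsum in IH. rewrite IH by lia. simpl. ring.
Qed.

Lemma Csum_add f g n : Csum (fun i => Cadd (f i) (g i)) n = Cadd (Csum f n) (Csum g n).
Proof. induction n; simpl; [cring|]. rewrite IHn; cring. Qed.

Lemma Csum_sub f g n : Csub (Csum f n) (Csum g n) = Csum (fun i => Csub (f i) (g i)) n.
Proof. induction n; simpl; [cring|]. rewrite <- IHn. cring. Qed.

Lemma Csum_scal c f n : Csum (fun i => Cmul c (f i)) n = Cmul c (Csum f n).
Proof. induction n; simpl; [cring|]. rewrite IHn; cring. Qed.

Lemma Csum_Re f n : Re (Csum f n) = Rsum (fun i => Re (f i)) n.
Proof. induction n; simpl; auto. rewrite IHn; auto. Qed.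

Lemma Csum_RtoC f n : Csum (fun i => RtoC (f i)) n = RtoC (Rsum f n).
Proof. induction n; simpl; [cring|]. rewrite IHn. cring. Qed.

Lemma Cmod_Csum f n : Cmod (Csum f n) <= Rsum (fun i => Cmod (f i)) n.
Proof.
  induction n; simpl; [rewrite Cmod_0; lra|].
  pose proof (Cmod_add (Csum f n) (f n)). lra.
Qed.

Lemma Csum_zero n : Csum (fun _ => C0) n = C0.
Proof. induction n; simpl; auto. rewrite IHn; cring. Qed.

Lemma Csum_delta f n k : (k < n)%nat ->
  Csum (fun i => if Nat.eqb i k then f i else C0) n = f k.
Proof.
  induction n; intros Hk; [lia|]. simpl. destruct (Nat.eqb_spec n k).
  - subst. rewrite (Csum_ext _ (fun _ => C0)), Csum_zero; [cring|].
    intros i Hi. destruct (Nat.eqb_spec i k); [lia | auto].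
  - rewrite IHn by lia. cring.
Qed.

Lemma Csum_swap (f : nat -> nat -> complex) n m :
  Csum (fun i => Csum (fun j => f i j) m) n = Csum (fun j => Csum (fun i => f i j) n) m.
Proof.
  induction n; simpl.
  - clear. induction m; simpl; [auto|]. rewrite <- IHm. cring.
  - rewrite IHn, <- Csum_add. reflexivity.
Qed.

Section FiniteOrthonormal.
Context {H : CHilbertSpace}.

Definition orthonormal_upto (v : nat -> H) (m : nat) : Prop :=
  forall i j, (i < m)%nat -> (j < m)%nat -> hinner (v i) (v j) = if Nat.eqb i j then C1 else C0.

Lemma orthonormal_upto_all (u : nat -> H) m : orthonormal u -> orthonormal_upto u m.
Proof. intros O i j _ _. apply O. Qed.

Lemma lincomb_ext c d (v w : nat -> H) m :
  (forall i, (i < m)%nat -> c i = d i /\ v i = w i) -> lincomb c v m = lincomb d w m.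
Proof. induction m; simpl; intros E; auto. destruct (E m ltac:(lia)) as [-> ->]. rewrite IHm; auto. Qed.

Lemma lincomb_zero (v : nat -> H) m : lincomb (fun _ => C0) v m = hzero.
Proof. induction m; simpl; auto. rewrite IHm, hscal_0, hadd_0. auto. Qed.

Lemma lincomb_add c d (v : nat -> H) m :
  lincomb (fun i => Cadd (c i) (d i)) v m = hadd (lincomb c v m) (lincomb d v m).
Proof. induction m; simpl; [rewrite hadd_0; auto|]. rewrite IHm. hvec. Qed.

Lemma lincomb_scal a c (v : nat -> H) m :
  lincomb (fun i => Cmul a (c i)) v m = hscal a (lincomb c v m).
Proof. induction m; simpl; [rewrite hscal_zero; auto|]. rewrite IHm. hvec. Qed.

Lemma lincomb_sub c d (v : nat -> H) m :
  hsub (lincomb c v m) (lincomb d v m) = lincomb (fun i => Csub (c i) (d i)) v m.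
Proof. induction m; simpl; [apply hsub_diag|]. rewrite <- IHm. hvec. Qed.

Lemma lincomb_delta a (v : nat -> H) m k : (k < m)%nat ->
  lincomb (fun j => if Nat.eqb j k then a else C0) v m = hscal a (v k).
Proof.
  induction m; intros Hk; [lia|]. simpl. destruct (Nat.eqb_spec m k).
  - subst. rewrite (lincomb_ext _ (fun _ => C0) _ v), lincomb_zero, hadd_0_l; auto.
    intros i Hi. split; auto. destruct (Nat.eqb_spec i k); [lia | auto].
  - rewrite IHm, hscal_0, hadd_0 by lia. auto.
Qed.

Lemma lincomb_linear (T : H -> H) c v m : linear_op T ->
  T (lincomb c v m) = lincomb c (fun i => T (v i)) m.
Proof.
  intros L. induction m; simpl; [apply linear_op_zero; auto|].
  destruct L as [La Ls]. rewrite La, Ls, IHm. auto.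
Qed.

Lemma hinner_lincomb_l c (v : nat -> H) m y :
  hinner (lincomb c v m) y = Csum (fun i => Cmul (c i) (hinner (v i) y)) m.
Proof. induction m; simpl; [apply hinner_0_l|]. rewrite hinner_add_l, IHm, hinner_scal_l. auto. Qed.

Lemma hinner_lincomb_r c (v : nat -> H) m y :
  hinner y (lincomb c v m) = Csum (fun i => Cmul (Cconj (c i)) (hinner y (v i))) m.
Proof. induction m; simpl; [apply hinner_0_r|]. rewrite hinner_add_r, IHm, hinner_scal_r. auto. Qed.

Lemma hinner_lincomb_orth_r (y : H) c (v : nat -> H) m :
  (forall k, (k < m)%nat -> hinner y (v k) = C0) -> hinner y (lincomb c v m) = C0.
Proof.
  intros Z. rewrite hinner_lincomb_r, (Csum_ext _ (fun _ => C0)); [apply Csum_zero|].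
  intros k Hk. rewrite Z by auto. apply Cmul_0_r.
Qed.

Lemma lincomb_coef c v m k : orthonormal_upto v m -> (k < m)%nat ->
  hinner (lincomb c v m) (v k) = c k.
Proof.
  intros O Hk. rewrite hinner_lincomb_l, (Csum_ext _ (fun i => if Nat.eqb i k then c i else C0)).
  - apply Csum_delta; auto.
  - intros i Hi. rewrite O by auto. destruct (Nat.eqb i k); cring.
Qed.

Lemma hinner_lincomb c d v m : orthonormal_upto v m ->
  hinner (lincomb c v m) (lincomb d v m) = Csum (fun i => Cmul (c i) (Cconj (d i))) m.
Proof.
  intros O. rewrite hinner_lincomb_r. apply Csum_ext. intros i Hi.
  rewrite lincomb_coef by auto. apply Cmul_comm.
Qed.

Lemma lincomb_norm_sq c v m : orthonormal_upto v m ->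
  Re (hinner (lincomb c v m) (lincomb c v m)) = Rsum (fun i => Cmod (c i) * Cmod (c i)) m.
Proof.
  intros O. rewrite hinner_lincomb, Csum_Re by auto. apply Rsum_ext. intros i _.
  rewrite Cmod_sq. destruct (c i); simpl; ring.
Qed.

Definition orth_proj (v : nat -> H) m (x : H) : H := lincomb (fun i => hinner x (v i)) v m.

Lemma orth_proj_residual v m x k : orthonormal_upto v m -> (k < m)%nat ->
  hinner (hsub x (orth_proj v m x)) (v k) = C0.
Proof.
  intros O Hk. rewrite hinner_sub_l. unfold orth_proj. rewrite lincomb_coef by auto.
  apply Csub_diag.
Qed.

Lemma orth_proj_norm_sq v m x : orthonormal_upto v m ->
  Re (hinner x x) = Re (hinner (orth_proj v m x) (orth_proj v m x))
                    + Re (hinner (hsub x (orth_proj v m x)) (hsub x (orth_proj v m x))).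
Proof.
  intros O. rewrite <- pythagoras, hadd_sub_cancel; auto.
  rewrite hinner_conj. unfold orth_proj at 2. rewrite hinner_lincomb_orth_r; [apply Cconj_0|].
  intros; apply orth_proj_residual; auto.
Qed.

Lemma bessel v m x : orthonormal_upto v m ->
  Rsum (fun i => Cmod (hinner x (v i)) * Cmod (hinner x (v i))) m <= Re (hinner x x).
Proof.
  intros O. rewrite (orth_proj_norm_sq v m x O). unfold orth_proj at 1 2.
  rewrite lincomb_norm_sq by auto.
  pose proof (hinner_pos _ (hsub x (orth_proj v m x))). lra.
Qed.

Definition snoc_family (z : nat -> H) len (w : H) : nat -> H :=
  fun i => if Nat.eqb i len then w else z i.

Lemma snoc_family_orthonormal (z : nat -> H) len w : orthonormal_upto z len ->
  hinner w w = C1 -> (forall i, (i < len)%nat -> hinner w (z i) = C0) ->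
  orthonormal_upto (snoc_family z len w) (S len).
Proof.
  intros O Ww Wz i j Hi Hj. unfold snoc_family.
  destruct (Nat.eqb_spec i len), (Nat.eqb_spec j len); subst.
  - rewrite Nat.eqb_refl. auto.
  - replace (Nat.eqb len j) with false by (symmetry; apply Nat.eqb_neq; auto). apply Wz. lia.
  - replace (Nat.eqb i len) with false by (symmetry; apply Nat.eqb_neq; auto).
    rewrite hinner_conj, Wz by lia. apply Cconj_0.
  - apply O; lia.
Qed.

End FiniteOrthonormal.

(** * Eventual properties, subsequences and compact operators *)

Definition eventually (P : nat -> Prop) : Prop := exists N, forall k, (N <= k)%nat -> P k.

Definition inf_often (P : nat -> Prop) : Prop := forall N, exists i, (N <= i)%nat /\ P i.

Lemma eventually_and (P Q : nat -> Prop) :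
  eventually P -> eventually Q -> eventually (fun k => P k /\ Q k).
Proof. intros [N1 H1] [N2 H2]. exists (max N1 N2). intros; split; [apply H1 | apply H2]; lia. Qed.

Lemma eventually_Fin (n : nat) (P : Fin.t n -> nat -> Prop) :
  (forall j, eventually (P j)) -> eventually (fun k => forall j, P j k).
Proof.
  induction n; intros Hj.
  - exists 0%nat. intros k _ j. apply Fin.case0. exact j.
  - destruct (IHn (fun j k => P (Fin.FS j) k)) as [N1 HN1]; [intros j; apply Hj|].
    destruct (Hj Fin.F1) as [N2 HN2].
    exists (max N1 N2). intros k Hk j. apply (Fin.caseS' j (fun j => P j k)).
    + apply HN2. lia.
    + intros j0. apply HN1. lia.
Qed.

Lemma eventually_forall_lt (M : nat) (P : nat -> nat -> Prop) :
  (forall i, (i < M)%nat -> eventually (P i)) -> eventually (fun k => forall i, (i < M)%nat -> P i k).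
Proof.
  induction M; intros Hi; [exists 0%nat; intros; lia|].
  destruct (eventually_and _ _ (IHM ltac:(intros; apply Hi; lia)) (Hi M ltac:(lia))) as [N HN].
  exists N. intros k Hk i Hi'. destruct (HN k Hk) as [H1 H2].
  destruct (Nat.eq_dec i M); [subst; auto | apply H1; lia].
Qed.

Lemma not_eventually_inf_often (P : nat -> Prop) :
  ~ eventually P -> inf_often (fun k => ~ P k).
Proof.
  intros NE N. apply NNPP. intros C. apply NE. exists N. intros k Hk.
  apply NNPP. intros np. apply C. eauto.
Qed.

Lemma inf_often_subseq (P : nat -> Prop) : inf_often P ->
  exists g : nat -> nat, (forall i, (g i < g (S i))%nat) /\ forall i, P (g i).
Proof.
  intros Hio.
  set (pick := fun N => proj1_sig (constructive_indefinite_description _ (Hio N))).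
  assert (Hp : forall N, (N <= pick N)%nat /\ P (pick N)).
  { intros N. unfold pick. destruct (constructive_indefinite_description _ (Hio N)); auto. }
  set (g := fix g i := match i with O => pick O | S j => pick (S (g j)) end).
  exists g. split.
  - intros i. destruct (Hp (S (g i))). simpl. lia.
  - intros [|i]; apply Hp.
Qed.

Lemma strict_incr_ge (g : nat -> nat) : (forall i, (g i < g (S i))%nat) -> forall i, (i <= g i)%nat.
Proof. intros Hg i; induction i; [lia|]. specialize (Hg i). lia. Qed.

Lemma strict_incr_lt (g : nat -> nat) : (forall i, (g i < g (S i))%nat) ->
  forall i j, (i < j)%nat -> (g i < g j)%nat.
Proof.
  intros Hg i j Hij. induction j; [lia|]. specialize (Hg j).
  destruct (Nat.eq_dec i j); [subst; auto|]. specialize (IHj ltac:(lia)). lia.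
Qed.

Lemma strict_incr_inj (g : nat -> nat) : (forall i, (g i < g (S i))%nat) ->
  forall i j, g i = g j -> i = j.
Proof.
  intros Hg i j E. destruct (Nat.lt_trichotomy i j) as [h|[h|h]]; auto.
  - pose proof (strict_incr_lt g Hg i j h). lia.
  - pose proof (strict_incr_lt g Hg j i h). lia.
Qed.

Lemma Ccv_eventually (u : nat -> complex) l : Ccv u l ->
  forall eps, eps > 0 -> eventually (fun k => Cmod (Csub (u k) l) < eps).
Proof.
  intros C eps He. destruct (C eps He) as [N HN]. exists N. intros k Hk. specialize (HN k Hk).
  unfold R_dist in HN. rewrite Rminus_0_r, Rabs_right in HN; auto. apply Rle_ge, Cmod_ge_0.
Qed.

Lemma Ccv_of_eventually (u : nat -> complex) l :
  (forall eps, eps > 0 -> eventually (fun k => Cmod (Csub (u k) l) < eps)) -> Ccv u l.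
Proof.
  intros C eps He. destruct (C eps He) as [N HN]. exists N. intros k Hk. specialize (HN k Hk).
  unfold R_dist. rewrite Rminus_0_r, Rabs_right; auto. apply Rle_ge, Cmod_ge_0.
Qed.

Section Sequences.
Context {H : CHilbertSpace}.

Lemma orthonormal_subseq (u : nat -> H) g : orthonormal u -> (forall i, (g i < g (S i))%nat) ->
  orthonormal (fun i => u (g i)).
Proof.
  intros O Hg i j. rewrite O. destruct (Nat.eqb_spec i j), (Nat.eqb_spec (g i) (g j)); auto.
  - subst; congruence.
  - apply strict_incr_inj in e; auto. congruence.
Qed.

Lemma orthonormal_hnorm (u : nat -> H) k : orthonormal u -> hnorm (u k) = 1.
Proof. intros O. apply hnorm_unit. rewrite O, Nat.eqb_refl. reflexivity. Qed.

Lemma hcv_eventually (u : nat -> H) l : hcv u l ->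
  forall eps, eps > 0 -> eventually (fun k => hnorm (hsub (u k) l) < eps).
Proof.
  intros C eps He. destruct (C eps He) as [N HN]. exists N. intros k Hk. specialize (HN k Hk).
  unfold R_dist in HN. rewrite Rminus_0_r, Rabs_right in HN; auto. apply Rle_ge, hnorm_pos.
Qed.

Lemma hcv_of_eventually (u : nat -> H) l :
  (forall eps, eps > 0 -> eventually (fun k => hnorm (hsub (u k) l) < eps)) -> hcv u l.
Proof.
  intros C eps He. destruct (C eps He) as [N HN]. exists N. intros k Hk. specialize (HN k Hk).
  unfold R_dist. rewrite Rminus_0_r, Rabs_right; auto. apply Rle_ge, hnorm_pos.
Qed.

Lemma hcv_unique (a : nat -> H) l1 l2 : hcv a l1 -> hcv a l2 -> l1 = l2.
Proof.
  intros C1 C2. apply hsub_eq_0, hnorm_eq_0.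
  apply Rle_antisym; [|apply hnorm_pos]. apply Rnot_lt_le. intros Hp.
  destruct (eventually_and _ _ (hcv_eventually a l1 C1 (hnorm (hsub l1 l2) / 2) ltac:(lra))
                               (hcv_eventually a l2 C2 (hnorm (hsub l1 l2) / 2) ltac:(lra)))
    as [N HN].
  destruct (HN N (le_n N)) as [H1 H2].
  pose proof (hnorm_sub_tri l1 (a N) l2) as Tri. rewrite (hnorm_sub_sym l1 (a N)) in Tri. lra.
Qed.

Lemma hcv_add (a b : nat -> H) la lb :
  hcv a la -> hcv b lb -> hcv (fun k => hadd (a k) (b k)) (hadd la lb).
Proof.
  intros Ca Cb. apply hcv_of_eventually. intros e He.
  destruct (eventually_and _ _ (hcv_eventually a la Ca (e / 2) ltac:(lra))
                               (hcv_eventually b lb Cb (e / 2) ltac:(lra))) as [N HN].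
  exists N. intros k Hk. destruct (HN k Hk).
  replace (hsub (hadd (a k) (b k)) (hadd la lb)) with (hadd (hsub (a k) la) (hsub (b k) lb))
    by hvec.
  pose proof (hnorm_add (hsub (a k) la) (hsub (b k) lb)). lra.
Qed.

Lemma hcv_scal (a : nat -> H) la c : hcv a la -> hcv (fun k => hscal c (a k)) (hscal c la).
Proof.
  intros Ca. apply hcv_of_eventually. intros e He.
  pose proof (Cmod_ge_0 c).
  destruct (hcv_eventually a la Ca (e / (Cmod c + 1))) as [N HN].
  { apply Rdiv_lt_0_compat; lra. }
  exists N. intros k Hk.
  replace (hsub (hscal c (a k)) (hscal c la)) with (hscal c (hsub (a k) la)) by hvec.
  rewrite hnorm_scal. specialize (HN k Hk). pose proof (hnorm_pos (hsub (a k) la)).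
  apply Rle_lt_trans with ((Cmod c + 1) * hnorm (hsub (a k) la)); [nra|].
  replace e with ((Cmod c + 1) * (e / (Cmod c + 1))) by (field; lra).
  apply Rmult_lt_compat_l; lra.
Qed.

Lemma hcv_eventually_const (a : nat -> H) l : eventually (fun k => a k = l) -> hcv a l.
Proof.
  intros [N E]. apply hcv_of_eventually. intros e He. exists N. intros k Hk.
  rewrite E, hsub_diag, hnorm_0; auto.
Qed.

Definition clinear (f : H -> complex) : Prop :=
  (forall x y, f (hadd x y) = Cadd (f x) (f y)) /\ (forall a x, f (hscal a x) = Cmul a (f x)).

Lemma clinear_lincomb f c v m : clinear f ->
  f (lincomb c v m) = Csum (fun i => Cmul (c i) (f (v i))) m.
Proof.
  intros [Ha Hs]. induction m; simpl.
  - rewrite <- (hscal_0 hzero), Hs. apply Cmul_0_l.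
  - rewrite Ha, Hs, IHm. auto.
Qed.

Lemma clinear_hinner_l (y : H) : clinear (fun v => hinner v y).
Proof. split; intros; [apply hinner_add_l | apply hinner_scal_l]. Qed.

Lemma clinear_comp_linear (f : H -> complex) (T : H -> H) :
  clinear f -> linear_op T -> clinear (fun v => f (T v)).
Proof.
  intros [fa fs] [Ta Ts]. split; intros; [rewrite Ta, fa | rewrite Ts, fs]; reflexivity.
Qed.

(* Testing [f] against [sum_i f(w_i)^* / |f(w_i)| w_i], a vector of norm [sqrt N]. *)
Lemma functional_large_on_orthonormal (f : H -> complex) M (w : nat -> H) N eps :
  clinear f -> (forall x, Cmod (f x) <= M * hnorm x) -> orthonormal_upto w N -> 0 < eps ->
  (forall i, (i < N)%nat -> eps <= Cmod (f (w i))) -> INR N * (eps * eps) <= M * M.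
Proof.
  intros Lf Bf Ow Heps Big.
  assert (Pos : forall i, (i < N)%nat -> 0 < Cmod (f (w i))) by (intros i Hi; specialize (Big i Hi); lra).
  set (c := fun i => Cmul (RtoC (/ Cmod (f (w i)))) (Cconj (f (w i)))).
  set (x := lincomb c w N).
  assert (Fx : Re (f x) = Rsum (fun i => Cmod (f (w i))) N).
  { unfold x. rewrite clinear_lincomb, Csum_Re by auto. apply Rsum_ext. intros i Hi.
    pose proof (Pos i Hi) as Hm. pose proof (Cmod_sq (f (w i))) as Hs. unfold c.
    set (m := Cmod (f (w i))) in *. clearbody m. destruct (f (w i)) as [p q]. simpl in Hs |- *.
    replace ((/ m * p - 0 * - q) * p - (/ m * - q + 0 * p) * q) with (/ m * (p * p + q * q))
      by ring.
    rewrite <- Hs. field. lra. }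
  assert (Nx : Re (hinner x x) = INR N).
  { unfold x. rewrite lincomb_norm_sq, <- (Rmult_1_r (INR N)), <- Rsum_const by auto.
    apply Rsum_ext. intros i Hi. unfold c. pose proof (Pos i Hi).
    rewrite Cmod_mul, Cmod_conj, Cmod_RtoC, Rabs_right
      by (apply Rle_ge, Rlt_le, Rinv_0_lt_compat; auto).
    field. lra. }
  assert (Lo : INR N * eps <= Re (f x)).
  { rewrite Fx, <- Rsum_const. apply Rsum_le. exact Big. }
  assert (Up : Re (f x) <= M * hnorm x).
  { pose proof (Bf x). pose proof (Re_le_Cmod (f x)). pose proof (Rle_abs (Re (f x))). lra. }
  pose proof (pos_INR N). pose proof (hnorm_pos x). pose proof (hnorm_sq x) as Sq.
  rewrite Nx in Sq.
  assert (0 <= INR N * eps) by nra.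
  assert ((INR N * eps) * (INR N * eps) <= (M * hnorm x) * (M * hnorm x)) by (apply Rmult_le_compat; lra).
  destruct (Req_dec (INR N) 0) as [Z|NZ]; [rewrite Z; nra|].
  assert (INR N * (INR N * (eps * eps)) <= INR N * (M * M)) by nra.
  apply Rmult_le_reg_l with (INR N); lra.
Qed.

Lemma bounded_functional_orthonormal_null (f : H -> complex) M (u : nat -> H) :
  clinear f -> (forall x, Cmod (f x) <= M * hnorm x) -> orthonormal u ->
  forall eps, eps > 0 -> eventually (fun k => Cmod (f (u k)) < eps).
Proof.
  intros Lf Bf Ou eps Heps. apply NNPP. intros NE.
  destruct (inf_often_subseq _ (not_eventually_inf_often _ NE)) as [g [Hg Pg]].
  destruct (INR_unbounded (M * M / (eps * eps))) as [N HN].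
  assert (Big := functional_large_on_orthonormal f M (fun i => u (g i)) N eps Lf Bf
           (orthonormal_upto_all _ N (orthonormal_subseq u g Ou Hg)) Heps
           (fun i _ => Rnot_lt_le _ _ (Pg i))).
  assert (Lt : M * M / (eps * eps) * (eps * eps) < INR N * (eps * eps))
    by (apply Rmult_lt_compat_r; nra).
  replace (M * M / (eps * eps) * (eps * eps)) with (M * M) in Lt by (field; lra).
  lra.
Qed.

Lemma compact_op_bounded (K : H -> H) : compact_op K -> exists M, forall x, hnorm (K x) <= M * hnorm x.
Proof.
  intros [L Cp]. apply NNPP. intros NB.
  assert (Big : forall i : nat, exists v, hnorm v = 1 /\ INR i < hnorm (K v)).
  { intros i. apply NNPP. intros C. apply NB. exists (INR i). intros x.
    destruct (Req_dec (hnorm x) 0) as [Z|NZ].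
    - apply hnorm_eq_0 in Z. subst. rewrite linear_op_zero, hnorm_0 by auto. lra.
    - pose proof (hnorm_pos x).
      set (v := hscal (RtoC (/ hnorm x)) x).
      assert (Ev : hnorm (K v) = / hnorm x * hnorm (K x)).
      { unfold v. destruct L as [_ Ls]. rewrite Ls, hnorm_scal, Cmod_RtoC, Rabs_right; auto.
        apply Rle_ge, Rlt_le, Rinv_0_lt_compat; lra. }
      assert (Nv : hnorm v = 1).
      { unfold v. rewrite hnorm_scal, Cmod_RtoC, Rabs_right; [field; lra|].
        apply Rle_ge, Rlt_le, Rinv_0_lt_compat; lra. }
      apply Rnot_lt_le. intros Hlt. apply C. exists v. split; auto. rewrite Ev.
      apply (Rmult_lt_reg_l (hnorm x)); [lra|]. field_simplify; lra. }
  destruct (choice _ Big) as [v Hv].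
  destruct (Cp v) as [phi [Hphi [l Hl]]]; [exists 1; intros; rewrite (proj1 (Hv k)); lra|].
  destruct (hcv_eventually _ _ Hl 1 ltac:(lra)) as [N HN].
  destruct (INR_unbounded (hnorm l + 1)) as [m Hm].
  specialize (HN (max N m) ltac:(lia)).
  pose proof (hnorm_sub_ge (K (v (phi (max N m)))) l).
  pose proof (proj2 (Hv (phi (max N m)))).
  pose proof (le_INR _ _ (strict_incr_ge phi Hphi (max N m))).
  pose proof (le_INR m (max N m) ltac:(lia)). lra.
Qed.

(* If [K u_k] does not tend to [0], compactness yields a limit [l <> 0] of some [K w_i] with [w]
   orthonormal; but [<K w_i, l>] tends both to [0] (weak nullity) and to [<l, l>]. *)
Lemma compact_op_orthonormal_null (K : H -> H) (u : nat -> H) : compact_op K -> orthonormal u ->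
  forall eps, eps > 0 -> eventually (fun k => hnorm (K (u k)) < eps).
Proof.
  intros Cp Ou eps He. apply NNPP. intros NE.
  destruct (inf_often_subseq _ (not_eventually_inf_often _ NE)) as [g [Hg Pg]].
  destruct (compact_op_bounded K Cp) as [MK HMK].
  destruct Cp as [L Cp].
  destruct (Cp (fun i => u (g i))) as [phi [Hphi [l Hl]]].
  { exists 1. intros; rewrite orthonormal_hnorm; auto; lra. }
  set (w := fun i => u (g (phi i))).
  assert (Ow : orthonormal w).
  { apply (orthonormal_subseq u (fun i => g (phi i))); auto.
    intros i. apply (strict_incr_lt g Hg). auto. }
  destruct (hcv_eventually _ _ Hl (eps / 2) ltac:(lra)) as [N1 HN1].
  assert (Lp : eps / 2 <= hnorm l).
  { specialize (HN1 N1 (le_n _)). pose proof (hnorm_sub_ge (K (w N1)) l).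
    pose proof (Rnot_lt_le _ _ (Pg (phi N1))). unfold w in *. lra. }
  set (d := hnorm l * hnorm l / 4).
  assert (Weak : eventually (fun k => Cmod (hinner (K (w k)) l) < d)).
  { apply (bounded_functional_orthonormal_null (fun v => hinner (K v) l) (MK * hnorm l) w); auto.
    - apply (clinear_comp_linear (fun v => hinner v l)); [apply clinear_hinner_l | auto].
    - intros x. pose proof (cauchy_schwarz (K x) l). pose proof (HMK x).
      pose proof (hnorm_pos l). pose proof (hnorm_pos x). nra.
    - unfold d. nra. }
  destruct (eventually_and _ _ Weak (hcv_eventually _ _ Hl (hnorm l / 4) ltac:(lra))) as [N HN].
  destruct (HN N (le_n N)) as [Small Close].
  set (e := hsub (K (w N)) l).
  change (hnorm e < hnorm l / 4) in Close.
  assert (E : hinner l l = Cadd (hinner (K (w N)) l) (Copp (hinner e l))).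
  { unfold e. rewrite hinner_sub_l. cring. }
  pose proof (Cmod_add (hinner (K (w N)) l) (Copp (hinner e l))) as Tri.
  rewrite <- E, Cmod_opp, hinner_self_real, Cmod_RtoC, Rabs_right, <- hnorm_sq in Tri
    by apply Rle_ge, hinner_pos.
  pose proof (cauchy_schwarz e l).
  assert (hnorm e * hnorm l <= hnorm l / 4 * hnorm l)
    by (apply Rmult_le_compat_r; [apply hnorm_pos | lra]).
  unfold d in Small. nra.
Qed.

End Sequences.

Lemma ess_num_range_of_compact_D_const (H : CHilbertSpace) (n : nat) (T K : Fin.t n -> H -> H) lam :
  (forall j, compact_op (K j)) -> D_const (tuple_add T K) lam -> ess_num_range T lam.
Proof.
  intros Cp [u [[Ou _] Hd]]. exists u. split; auto. intros j.
  apply Ccv_of_eventually. intros eps He.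
  destruct (compact_op_orthonormal_null (K j) u (Cp j) Ou eps He) as [N HN]. exists N.
  intros k Hk. specialize (HN k Hk). specialize (Hd k j).
  unfold tuple_add in Hd. rewrite hinner_add_l in Hd.
  replace (Csub (hinner (T j (u k)) (u k)) (lam j)) with (Copp (hinner (K j (u k)) (u k)))
    by (rewrite <- Hd; cring).
  rewrite Cmod_opp. pose proof (cauchy_schwarz (K j (u k)) (u k)) as CS.
  rewrite orthonormal_hnorm in CS by auto. lra.
Qed.

(** * The diagonal argument *)

Lemma inf_often_split (P Q1 Q2 : nat -> Prop) : inf_often P -> (forall i, P i -> Q1 i \/ Q2 i) ->
  inf_often (fun i => P i /\ Q1 i) \/ inf_often (fun i => P i /\ Q2 i).
Proof.
  intros IP Hs. destruct (classic (inf_often (fun i => P i /\ Q1 i))) as [h|h]; [left; auto|right].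
  apply not_all_ex_not in h. destruct h as [N HN].
  intros M. destruct (IP (max M N)) as [i [Hi Pi]]. exists i. split; [lia|].
  split; auto. destruct (Hs i Pi); auto. exfalso. apply HN. exists i. split; [lia | auto].
Qed.

Lemma inf_often_bisect (P : nat -> Prop) (f : nat -> R) a w : inf_often P -> 0 <= w ->
  (forall i, P i -> a <= f i <= a + w) ->
  forall t, exists Q : nat -> Prop, (forall i, Q i -> P i) /\ inf_often Q /\
    exists a', forall i, Q i -> a' <= f i <= a' + w / 2 ^ t.
Proof.
  intros IP Hw Hb t. induction t.
  - exists P. split; auto. split; auto. exists a. simpl. intros. replace (w / 1) with w by field. auto.
  - destruct IHt as [Q [QP [IQ [a' Ha']]]].
    set (h := w / 2 ^ S t).
    assert (Hh : w / 2 ^ t = h + h). { unfold h. simpl. field. apply pow_nonzero. lra. }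
    destruct (inf_often_split Q (fun i => f i <= a' + h) (fun i => a' + h <= f i) IQ) as [I1|I2].
    { intros i _. lra. }
    + exists (fun i => Q i /\ f i <= a' + h). split; [intros i [q _]; auto|]. split; auto.
      exists a'. intros i [q Hq]. specialize (Ha' i q). fold h. lra.
    + exists (fun i => Q i /\ a' + h <= f i). split; [intros i [q _]; auto|]. split; auto.
      exists (a' + h). intros i [q Hq]. specialize (Ha' i q). fold h. lra.
Qed.

Lemma inf_often_refine_bounded (P : nat -> Prop) (g : nat -> complex) B t : inf_often P ->
  (forall i, Cmod (g i) <= B) ->
  exists Q : nat -> Prop, (forall i, Q i -> P i) /\ inf_often Q /\
    forall i i', Q i -> Q i' -> Cmod (Csub (g i) (g i')) <= 4 * B / 2 ^ t.
Proof.
  intros IP Hg.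
  assert (B0 : 0 <= B) by (pose proof (Hg 0%nat); pose proof (Cmod_ge_0 (g 0%nat)); lra).
  assert (Box : forall i, - B <= Re (g i) <= - B + 2 * B /\ - B <= Im (g i) <= - B + 2 * B).
  { intros i. pose proof (Re_le_Cmod (g i)). pose proof (Im_le_Cmod (g i)). pose proof (Hg i).
    unfold Rabs in *. destruct (Rcase_abs (Re (g i))), (Rcase_abs (Im (g i))); lra. }
  destruct (inf_often_bisect P (fun i => Re (g i)) (- B) (2 * B) IP ltac:(lra))
    with (t := t) as [Q1 [Q1P [IQ1 [a1 Ha1]]]]; [intros i _; apply Box|].
  destruct (inf_often_bisect Q1 (fun i => Im (g i)) (- B) (2 * B) IQ1 ltac:(lra))
    with (t := t) as [Q2 [Q2P [IQ2 [a2 Ha2]]]]; [intros i _; apply Box|].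
  exists Q2. split; [auto|]. split; auto.
  intros i i' Qi Qi'. eapply Rle_trans; [apply Cmod_le_ReIm|].
  pose proof (Ha1 i (Q2P i Qi)). pose proof (Ha1 i' (Q2P i' Qi')).
  pose proof (Ha2 i Qi). pose proof (Ha2 i' Qi'). simpl.
  replace (4 * B / 2 ^ t) with (2 * B / 2 ^ t + 2 * B / 2 ^ t) by (field; apply pow_nonzero; lra).
  apply Rplus_le_compat; unfold Rabs; destruct Rcase_abs; lra.
Qed.

Lemma inf_often_refine_bounded_many (c : nat -> nat -> complex) B (P : nat -> Prop) :
  inf_often P -> (forall k i, Cmod (c k i) <= B) ->
  forall s t, exists Q : nat -> Prop, (forall i, Q i -> P i) /\ inf_often Q /\
    forall k i i', (k < s)%nat -> Q i -> Q i' -> Cmod (Csub (c k i) (c k i')) <= 4 * B / 2 ^ t.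
Proof.
  intros IP Hc s t. induction s.
  - exists P. split; auto. split; auto. intros; lia.
  - destruct IHs as [Q [QP [IQ HQ]]].
    destruct (inf_often_refine_bounded Q (c s) B t IQ (Hc s)) as [Q' [Q'Q [IQ' HQ']]].
    exists Q'. split; auto. split; auto.
    intros k i i' Hk Qi Qi'. destruct (Nat.eq_dec k s); [subst; auto|].
    apply HQ; auto. lia.
Qed.

Lemma nested_diagonal_subseq (Ps : nat -> nat -> Prop) :
  (forall s i, Ps (S s) i -> Ps s i) -> (forall s, inf_often (Ps s)) ->
  exists phi : nat -> nat, (forall i, (phi i < phi (S i))%nat) /\
    forall s i, (s <= i)%nat -> Ps s (phi i).
Proof.
  intros Nest Inf.
  destruct (choice (fun (sN : nat * nat) i => (snd sN <= i)%nat /\ Ps (fst sN) i))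
    as [pick Hpick]; [intros [s N]; apply Inf|].
  set (phi := fix phi i := match i with O => pick (0, 0)%nat | S j => pick (S j, S (phi j)) end).
  assert (In : forall i, Ps i (phi i)) by (intros [|i]; apply (Hpick (_, _))).
  exists phi. split.
  - intros i. destruct (Hpick (S i, S (phi i))) as [Le _]. simpl in Le |- *. lia.
  - assert (Down : forall s s' j, (s <= s')%nat -> Ps s' j -> Ps s j)
      by (intros s s' j Le; induction Le; auto).
    intros s i Hs. exact (Down s i (phi i) Hs (In i)).
Qed.

Lemma pow2_ge_INR t : INR t <= 2 ^ t.
Proof.
  induction t; [simpl; lra|]. rewrite S_INR. simpl.
  assert (1 <= 2 ^ t) by (apply pow_R1_Rle; lra). lra.
Qed.

Lemma diagonal_subseq_cauchy (c : nat -> nat -> complex) B : (forall k i, Cmod (c k i) <= B) ->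
  exists phi : nat -> nat, (forall i, (phi i < phi (S i))%nat) /\
    forall k eta, eta > 0 -> exists N, forall i i', (N <= i)%nat -> (N <= i')%nat ->
      Cmod (Csub (c k (phi i)) (c k (phi i'))) <= eta.
Proof.
  intros Hc.
  assert (B0 : 0 <= B) by (pose proof (Hc 0%nat 0%nat); pose proof (Cmod_ge_0 (c 0%nat 0%nat)); lra).
  destruct (choice (fun (Ps : (nat -> Prop) * nat) Q =>
              inf_often (fst Ps) -> (forall i, Q i -> fst Ps i) /\ inf_often Q /\
                forall k i i', (k < snd Ps)%nat -> Q i -> Q i' ->
                  Cmod (Csub (c k i) (c k i')) <= 4 * B / 2 ^ (snd Ps)))
    as [refine Hrefine].
  { intros [P s]. destruct (classic (inf_often P)) as [IP|NI].
    - destruct (inf_often_refine_bounded_many c B P IP Hc s s) as [Q HQ]. exists Q. auto.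
    - exists P. intros IP. contradiction. }
  set (Ps := fix Ps s := match s with O => fun _ => True | S s' => refine (Ps s', S s') end).
  assert (Inf : forall s, inf_often (Ps s)).
  { induction s; [intros N; exists N; simpl; auto | apply (Hrefine (Ps s, S s) IHs)]. }
  destruct (nested_diagonal_subseq Ps) as [phi [Hphi Hin]];
    [intros s' i; apply (Hrefine (Ps s', S s') (Inf s')) | exact Inf |].
  exists phi. split; auto.
  intros k eta Heta.
  destruct (INR_unbounded (4 * B / eta)) as [N0 HN0].
  set (s := max N0 k).
  exists (S s). intros i i' Hi Hi'.
  eapply Rle_trans.
  { apply (Hrefine (Ps s, S s) (Inf s)); simpl; [lia | apply (Hin (S s)); lia | apply (Hin (S s)); lia]. }
  simpl snd. pose proof (pow2_ge_INR (S s)). pose proof (le_INR N0 (S s) ltac:(lia)).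
  assert (Hp : 0 < 2 ^ S s) by (apply pow_lt; lra).
  apply (Rmult_le_reg_r (2 ^ S s)); auto. unfold Rdiv. rewrite Rmult_assoc, Rinv_l by lra.
  assert (4 * B / eta * eta = 4 * B) by (field; lra).
  nra.
Qed.

(** * Compact diagonal operators *)

Section DiagonalOperator.
Context {H : CHilbertSpace}.
Variable u : nat -> H.
Variable eps : nat -> complex.
Hypothesis Ou : orthonormal u.
Hypothesis eps_null : forall d, d > 0 -> eventually (fun k => Cmod (eps k) <= d).

Definition diag_partial m (x : H) : H := lincomb (fun k => Cmul (eps k) (hinner x (u k))) u m.

Lemma diag_partial_tail m p x : (m <= p)%nat ->
  hsub (diag_partial p x) (diag_partial m x) =
  lincomb (fun k => if Nat.ltb k m then C0 else Cmul (eps k) (hinner x (u k))) u p.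
Proof.
  intros Hmp. induction Hmp.
  - rewrite hsub_diag, (lincomb_ext _ (fun _ => C0) _ u), lincomb_zero; auto.
    intros i Hi. split; auto. destruct (Nat.ltb_spec i m); [auto | lia].
  - unfold diag_partial in *. simpl. rewrite <- IHHmp.
    destruct (Nat.ltb_spec m0 m); [lia | hvec].
Qed.

Lemma diag_partial_tail_bound m p x d : 0 <= d -> (forall k, (m <= k)%nat -> Cmod (eps k) <= d) ->
  (m <= p)%nat -> hnorm (hsub (diag_partial p x) (diag_partial m x)) <= d * hnorm x.
Proof.
  intros D0 Hd Hmp. rewrite diag_partial_tail by auto.
  apply hnorm_le_sq; [apply Rmult_le_pos; auto; apply hnorm_pos|].
  rewrite lincomb_norm_sq by (apply orthonormal_upto_all; auto).
  apply Rle_trans with (Rsum (fun k => d * d * (Cmod (hinner x (u k)) * Cmod (hinner x (u k)))) p).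
  - apply Rsum_le. intros i Hi. pose proof (Cmod_ge_0 (hinner x (u i))).
    destruct (Nat.ltb_spec i m); [rewrite Cmod_0; nra|].
    rewrite Cmod_mul. specialize (Hd i ltac:(lia)). pose proof (Cmod_ge_0 (eps i)).
    replace (Cmod (eps i) * Cmod (hinner x (u i)) * (Cmod (eps i) * Cmod (hinner x (u i)))) with
      ((Cmod (eps i) * Cmod (eps i)) * (Cmod (hinner x (u i)) * Cmod (hinner x (u i)))) by ring.
    apply Rmult_le_compat_r; nra.
  - rewrite Rsum_scal. replace (d * hnorm x * (d * hnorm x)) with (d * d * (hnorm x * hnorm x)) by ring.
    rewrite hnorm_sq. apply Rmult_le_compat_l; [nra|]. apply bessel, orthonormal_upto_all; auto.
Qed.

Lemma diag_partial_converges x : exists l, hcv (fun m => diag_partial m x) l.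
Proof.
  apply (hcomplete H (fun m => diag_partial m x)). intros e He.
  pose proof (hnorm_pos x).
  set (d := e / (4 * (hnorm x + 1))).
  assert (Dp : d > 0) by (unfold d; apply Rdiv_lt_0_compat; lra).
  assert (d * hnorm x < e / 2).
  { assert (d * (hnorm x + 1) = e / 4) by (unfold d; field; lra). nra. }
  destruct (eps_null d Dp) as [N HN].
  exists N. intros m p Hm Hp.
  change (hnorm (hsub (diag_partial m x) (diag_partial p x)) < e).
  pose proof (hnorm_sub_tri (diag_partial m x) (diag_partial N x) (diag_partial p x)).
  pose proof (diag_partial_tail_bound N m x d ltac:(lra) HN Hm).
  pose proof (diag_partial_tail_bound N p x d ltac:(lra) HN Hp).
  rewrite (hnorm_sub_sym (diag_partial N x)) in *. lra.
Qed.

Definition diag_op (x : H) : H :=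
  proj1_sig (constructive_indefinite_description _ (diag_partial_converges x)).

Lemma diag_op_cv x : hcv (fun m => diag_partial m x) (diag_op x).
Proof. unfold diag_op. destruct constructive_indefinite_description; auto. Qed.

Lemma diag_op_linear : linear_op diag_op.
Proof.
  split.
  - intros x y. apply (hcv_unique (fun m => diag_partial m (hadd x y))); [apply diag_op_cv|].
    replace (fun m => diag_partial m (hadd x y)) with (fun m => hadd (diag_partial m x) (diag_partial m y)).
    + apply hcv_add; apply diag_op_cv.
    + apply functional_extensionality. intros m. unfold diag_partial. rewrite <- lincomb_add.
      apply lincomb_ext. intros; split; auto. rewrite hinner_add_l. cring.
  - intros a x. apply (hcv_unique (fun m => diag_partial m (hscal a x))); [apply diag_op_cv|].
    replace (fun m => diag_partial m (hscal a x)) with (fun m => hscal a (diag_partial m x)).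
    + apply hcv_scal; apply diag_op_cv.
    + apply functional_extensionality. intros m. unfold diag_partial. rewrite <- lincomb_scal.
      apply lincomb_ext. intros; split; auto. rewrite hinner_scal_l. cring.
Qed.

Lemma diag_op_basis k : diag_op (u k) = hscal (eps k) (u k).
Proof.
  apply (hcv_unique (fun m => diag_partial m (u k))); [apply diag_op_cv|].
  apply hcv_eventually_const. exists (S k). intros m Hm. unfold diag_partial.
  rewrite <- (lincomb_delta (eps k) u m k) by lia. apply lincomb_ext. intros i Hi. split; auto.
  rewrite Ou. destruct (Nat.eqb_spec k i), (Nat.eqb_spec i k); subst; try lia; cring.
Qed.

Lemma diag_op_approx m x d : 0 <= d -> (forall k, (m <= k)%nat -> Cmod (eps k) <= d) ->
  hnorm (hsub (diag_op x) (diag_partial m x)) <= d * hnorm x.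
Proof.
  intros D0 Hd. apply Rle_plus_epsilon. intros e He.
  destruct (hcv_eventually _ _ (diag_op_cv x) e He) as [N HN].
  specialize (HN (max N m) ltac:(lia)). rewrite hnorm_sub_sym in HN.
  pose proof (hnorm_sub_tri (diag_op x) (diag_partial (max N m) x) (diag_partial m x)).
  pose proof (diag_partial_tail_bound m (max N m) x d D0 Hd ltac:(lia)). lra.
Qed.

Lemma diag_partial_sub_norm_sq m x y eta :
  (forall k, (k < m)%nat -> Cmod (Csub (hinner x (u k)) (hinner y (u k))) <= eta) ->
  Re (hinner (hsub (diag_partial m x) (diag_partial m y)) (hsub (diag_partial m x) (diag_partial m y)))
  <= eta * eta * Rsum (fun k => Cmod (eps k) * Cmod (eps k)) m.
Proof.
  intros Close. unfold diag_partial. rewrite lincomb_sub, lincomb_norm_sq, <- Rsum_scal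
    by (apply orthonormal_upto_all; auto).
  apply Rsum_le. intros k Hk.
  replace (Csub (Cmul (eps k) (hinner x (u k))) (Cmul (eps k) (hinner y (u k))))
    with (Cmul (eps k) (Csub (hinner x (u k)) (hinner y (u k)))) by cring.
  rewrite Cmod_mul. specialize (Close k Hk).
  set (a := Cmod (eps k)). set (b := Cmod (Csub (hinner x (u k)) (hinner y (u k)))) in *.
  assert (0 <= a) by apply Cmod_ge_0. assert (0 <= b) by apply Cmod_ge_0.
  replace (a * b * (a * b)) with ((a * a) * (b * b)) by ring.
  replace (eta * eta * (a * a)) with ((a * a) * (eta * eta)) by ring.
  apply Rmult_le_compat_l; [nra|]. apply Rmult_le_compat; lra.
Qed.

Lemma diag_partial_cauchy (w : nat -> H) M e : e > 0 ->
  (forall k eta, eta > 0 -> exists N, forall i i', (N <= i)%nat -> (N <= i')%nat ->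
     Cmod (Csub (hinner (w i) (u k)) (hinner (w i') (u k))) <= eta) ->
  exists N, forall a b, (N <= a)%nat -> (N <= b)%nat ->
    hnorm (hsub (diag_partial M (w a)) (diag_partial M (w b))) <= e.
Proof.
  intros He Cauchy.
  set (A := Rsum (fun k => Cmod (eps k) * Cmod (eps k)) M).
  assert (A0 : 0 <= A) by (apply Rsum_nonneg; intros; nra).
  set (eta := e / (A + 1)).
  assert (EtaA : eta * eta * A <= e * e).
  { unfold eta. replace (e / (A + 1) * (e / (A + 1)) * A) with (e * e * (A / ((A + 1) * (A + 1))))
      by (field; lra).
    assert (A / ((A + 1) * (A + 1)) <= 1).
    { apply (Rmult_le_reg_r ((A + 1) * (A + 1))); [nra|]. field_simplify; nra. }
    assert (0 <= A / ((A + 1) * (A + 1)))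
      by (apply Rmult_le_pos; auto; apply Rlt_le, Rinv_0_lt_compat; nra).
    nra. }
  destruct (eventually_forall_lt M (fun k N => forall i i', (N <= i)%nat -> (N <= i')%nat ->
       Cmod (Csub (hinner (w i) (u k)) (hinner (w i') (u k))) <= eta)) as [N HN].
  { intros k _. destruct (Cauchy k eta) as [N HN]; [unfold eta; apply Rdiv_lt_0_compat; lra|].
    exists N. intros N' HN' i i' Hi Hi'. apply HN; lia. }
  exists N. intros a b Ha Hb. apply hnorm_le_sq; [lra|].
  eapply Rle_trans; [|exact EtaA].
  apply diag_partial_sub_norm_sq. intros k Hk. apply (HN N); auto.
Qed.

(* Truncations of a coordinatewise Cauchy subsequence are Cauchy, and [diag_op] is uniformly
   close to its truncations. *)
Lemma diag_op_compact : compact_op diag_op.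
Proof.
  split; [apply diag_op_linear|].
  intros v [B HB].
  assert (B0 : 0 <= B) by (pose proof (HB 0%nat); pose proof (hnorm_pos (v 0%nat)); lra).
  destruct (diagonal_subseq_cauchy (fun k i => hinner (v i) (u k)) B) as [phi [Hphi Hc]].
  { intros k i. pose proof (cauchy_schwarz (v i) (u k)) as CS. rewrite (orthonormal_hnorm u k Ou) in CS.
    specialize (HB i). lra. }
  exists phi. split; auto.
  apply (hcomplete H (fun i => diag_op (v (phi i)))). intros e He.
  change (exists N, forall m p, (m >= N)%nat -> (p >= N)%nat ->
            hnorm (hsub (diag_op (v (phi m))) (diag_op (v (phi p)))) < e).
  set (d := e / (3 * (B + 1))).
  assert (Dp : d > 0) by (unfold d; apply Rdiv_lt_0_compat; lra).
  assert (Dv : forall i, d * hnorm (v i) <= e / 3).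
  { intros i. specialize (HB i). pose proof (hnorm_pos (v i)).
    assert (d * (B + 1) = e / 3) by (unfold d; field; lra). nra. }
  destruct (eps_null d Dp) as [M HM].
  destruct (diag_partial_cauchy (fun i => v (phi i)) M (e / 6) ltac:(lra) Hc) as [N Mid].
  exists N. intros a b Ha Hb.
  pose proof (diag_op_approx M (v (phi a)) d ltac:(lra) HM) as Ea.
  pose proof (diag_op_approx M (v (phi b)) d ltac:(lra) HM) as Eb.
  rewrite hnorm_sub_sym in Eb.
  pose proof (Mid a b Ha Hb).
  pose proof (hnorm_sub_tri (diag_op (v (phi a))) (diag_partial M (v (phi a))) (diag_op (v (phi b)))).
  pose proof (hnorm_sub_tri (diag_partial M (v (phi a))) (diag_partial M (v (phi b))) (diag_op (v (phi b)))).
  pose proof (Dv (phi a)). pose proof (Dv (phi b)). lra.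
Qed.

End DiagonalOperator.

Lemma compact_diagonal_op_exists {H : CHilbertSpace} (u : nat -> H) (eps : nat -> complex) :
  orthonormal u -> (forall d, d > 0 -> eventually (fun k => Cmod (eps k) <= d)) ->
  exists K, compact_op K /\ forall k, K (u k) = hscal (eps k) (u k).
Proof.
  intros Ou Eps. exists (diag_op u eps Ou Eps).
  split; [apply diag_op_compact | apply diag_op_basis].
Qed.

(** * Hadamard mixing *)

(* The Sylvester-Hadamard matrix of order [2^p]: [hadamard p q a = (-1)^(popcount (q land a))],
   computed by recursion on the top bit. *)
Fixpoint hadamard (p q a : nat) : R :=
  match p with
  | O => 1
  | S p' => hadamard p' (q mod 2 ^ p') (a mod 2 ^ p') *
            (if andb (Nat.leb (2 ^ p') q) (Nat.leb (2 ^ p') a) then -1 else 1)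
  end.

Lemma hadamard_sq p q a : hadamard p q a * hadamard p q a = 1.
Proof.
  revert q a. induction p; intros; simpl; [ring|].
  specialize (IHp (q mod 2 ^ p) (a mod 2 ^ p)).
  set (h := hadamard p (q mod 2 ^ p) (a mod 2 ^ p)) in *.
  destruct (andb _ _); (transitivity (h * h); [ring | exact IHp]).
Qed.

Lemma hadamard_sym p q a : hadamard p q a = hadamard p a q.
Proof. revert q a. induction p; intros; simpl; auto. rewrite IHp, Bool.andb_comm. auto. Qed.

Lemma pow2_pos p : (0 < 2 ^ p)%nat.
Proof. induction p; simpl; lia. Qed.

Lemma split_top_bit m q : (q < m + m)%nat -> q = ((if Nat.leb m q then m else 0) + q mod m)%nat.
Proof.
  intros Hq. destruct (Nat.leb_spec m q).
  - rewrite (Nat.Div0.mod_eq q m). replace (q / m)%nat with 1%nat; [lia|].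
    apply Nat.div_unique with (q - m)%nat; lia.
  - rewrite Nat.mod_small; lia.
Qed.

Lemma hadamard_orth p q r : (q < 2 ^ p)%nat -> (r < 2 ^ p)%nat ->
  Rsum (fun a => hadamard p q a * hadamard p r a) (2 ^ p) = if Nat.eqb q r then INR (2 ^ p) else 0.
Proof.
  revert q r. induction p; intros q r Hq Hr.
  - simpl in *. replace q with 0%nat by lia. replace r with 0%nat by lia. simpl. ring.
  - set (m := (2 ^ p)%nat) in *. assert (m0 : (0 < m)%nat) by apply pow2_pos.
    replace (2 ^ S p)%nat with (m + m)%nat in * by (simpl; unfold m; lia).
    set (sq := if Nat.leb m q then -1 else 1). set (sr := if Nat.leb m r then -1 else 1).
    rewrite Rsum_split.
    rewrite (Rsum_ext _ (fun a => hadamard p (q mod m) a * hadamard p (r mod m) a)).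
    2: { intros a Ha. simpl. fold m. rewrite (Nat.mod_small a m) by auto.
         replace (Nat.leb m a) with false by (symmetry; apply Nat.leb_gt; auto).
         rewrite !Bool.andb_false_r. ring. }
    rewrite (Rsum_ext (fun i => hadamard (S p) q (m + i) * hadamard (S p) r (m + i))
               (fun a => (sq * sr) * (hadamard p (q mod m) a * hadamard p (r mod m) a))).
    2: { intros a Ha. simpl. fold m.
         replace ((m + a) mod m)%nat with a.
         2: { rewrite Nat.add_comm, Nat.Div0.add_mod, Nat.Div0.mod_same, Nat.add_0_r,
                Nat.Div0.mod_mod, Nat.mod_small; auto. }
         replace (Nat.leb m (m + a)) with true by (symmetry; apply Nat.leb_le; lia).
         rewrite !Bool.andb_true_r. unfold sq, sr. ring. }
    rewrite Rsum_scal, IHp by (apply Nat.mod_upper_bound; lia).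
    pose proof (split_top_bit m q Hq). pose proof (split_top_bit m r Hr).
    pose proof (Nat.mod_upper_bound q m ltac:(lia)). pose proof (Nat.mod_upper_bound r m ltac:(lia)).
    rewrite plus_INR. unfold sq, sr in *.
    destruct (Nat.leb m q), (Nat.leb m r);
    destruct (Nat.eqb_spec (q mod m) (r mod m)); destruct (Nat.eqb_spec q r); try ring; lia.
Qed.

Definition hadamard_coef p q a : complex := RtoC (hadamard p q a / sqrt (INR (2 ^ p))).

Lemma sqrt_pow2_pos p : 0 < sqrt (INR (2 ^ p)).
Proof. apply sqrt_lt_R0, lt_0_INR, pow2_pos. Qed.

Lemma hadamard_coef_mul_conj p q a r b :
  Cmul (hadamard_coef p q a) (Cconj (hadamard_coef p r b))
  = RtoC (hadamard p q a * hadamard p r b / INR (2 ^ p)).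
Proof.
  unfold hadamard_coef. rewrite RtoC_conj, RtoC_mul. f_equal.
  pose proof (sqrt_pow2_pos p). rewrite <- (sqrt_sqrt (INR (2 ^ p))) at 3 by apply pos_INR.
  field. lra.
Qed.

Lemma Cmod_hadamard_coef p q a : Cmod (hadamard_coef p q a) = / sqrt (INR (2 ^ p)).
Proof.
  unfold hadamard_coef. rewrite Cmod_RtoC. pose proof (sqrt_pow2_pos p).
  pose proof (hadamard_sq p q a).
  unfold Rdiv. rewrite Rabs_mult, Rabs_inv, (Rabs_right (sqrt _)) by lra.
  replace (Rabs (hadamard p q a)) with 1 by (unfold Rabs; destruct Rcase_abs; nra). ring.
Qed.

Section HadamardMix.
Context {H : CHilbertSpace}.

(* Rotation of [Z_0, ..., Z_(2^p - 1)] by the unitary matrix [2^(-p/2) hadamard p]. *)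
Definition hadamard_mix p (Z : nat -> H) q : H := lincomb (hadamard_coef p q) Z (2 ^ p).

Lemma hadamard_mix_orthonormal p Z : orthonormal_upto Z (2 ^ p) ->
  orthonormal_upto (hadamard_mix p Z) (2 ^ p).
Proof.
  intros O q r Hq Hr. unfold hadamard_mix. rewrite hinner_lincomb by auto.
  rewrite (Csum_ext _ (fun a => RtoC (/ INR (2 ^ p) * (hadamard p q a * hadamard p r a))))
    by (intros; rewrite hadamard_coef_mul_conj; f_equal; unfold Rdiv; ring).
  rewrite Csum_RtoC, Rsum_scal, hadamard_orth by auto.
  assert (INR (2 ^ p) <> 0) by (apply not_0_INR; pose proof (pow2_pos p); lia).
  destruct (Nat.eqb q r); apply Ceq; simpl; try field; auto; ring.
Qed.

Lemma hadamard_mix_orth p Z v : (forall a, (a < 2 ^ p)%nat -> hinner (Z a) v = C0) ->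
  forall q, hinner (hadamard_mix p Z q) v = C0.
Proof.
  intros Hz q. unfold hadamard_mix. rewrite hinner_lincomb_l, (Csum_ext _ (fun _ => C0));
    [apply Csum_zero|].
  intros; rewrite Hz by auto. apply Cmul_0_r.
Qed.

(* The rotation is inverted by its transpose: [Z a = sum_q hadamard_coef p q a * mix q]. *)
Lemma hadamard_mix_span p Z y : (forall q, (q < 2 ^ p)%nat -> hinner y (hadamard_mix p Z q) = C0) ->
  forall a, (a < 2 ^ p)%nat -> hinner y (Z a) = C0.
Proof.
  intros Hy a Ha. set (N := (2 ^ p)%nat) in *.
  assert (NZ : INR N <> 0) by (apply not_0_INR; pose proof (pow2_pos p); unfold N; lia).
  assert (E : Csum (fun q => Cmul (hadamard_coef p q a) (hinner y (hadamard_mix p Z q))) N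
              = hinner y (Z a)).
  { unfold hadamard_mix.
    rewrite (Csum_ext _ (fun q => Csum (fun b => Cmul (RtoC (/ INR N * (hadamard p a q * hadamard p b q)))
                                                      (hinner y (Z b))) N)).
    2: { intros q Hq. rewrite hinner_lincomb_r, <- Csum_scal. apply Csum_ext. intros b Hb.
         rewrite Cmul_assoc, hadamard_coef_mul_conj, (hadamard_sym p q a), (hadamard_sym p q b).
         f_equal. f_equal. unfold Rdiv, N. ring. }
    rewrite Csum_swap, (Csum_ext _ (fun b => if Nat.eqb b a then hinner y (Z b) else C0));
      [apply Csum_delta; auto|].
    intros b Hb. rewrite (Csum_ext _ (fun q => Cmul (hinner y (Z b))
                                              (RtoC (/ INR N * (hadamard p a q * hadamard p b q)))))
      by (intros; apply Cmul_comm).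
    rewrite Csum_scal, Csum_RtoC, Rsum_scal, hadamard_orth by auto. fold N.
    destruct (Nat.eqb_spec a b), (Nat.eqb_spec b a); try lia.
    - apply Ceq; simpl; field_simplify; auto; ring.
    - cring. }
  rewrite <- E, (Csum_ext _ (fun _ => C0)); [apply Csum_zero|].
  intros q Hq. rewrite Hy by auto. apply Cmul_0_r.
Qed.

Lemma hadamard_mix_diag p Z (T : H -> H) lam q : orthonormal_upto Z (2 ^ p) -> linear_op T ->
  (q < 2 ^ p)%nat ->
  Cmod (Csub (hinner (T (hadamard_mix p Z q)) (hadamard_mix p Z q)) lam) <=
  Rsum (fun a => Rsum (fun b => / INR (2 ^ p) *
     Cmod (Csub (hinner (T (Z a)) (Z b)) (if Nat.eqb a b then lam else C0))) (2 ^ p)) (2 ^ p).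
Proof.
  intros O L Hq. set (N := (2 ^ p)%nat).
  assert (NZ : INR N <> 0) by (apply not_0_INR; pose proof (pow2_pos p); unfold N; lia).
  set (w := fun a b => Cmul (hadamard_coef p q a) (Cconj (hadamard_coef p q b))).
  assert (E1 : hinner (T (hadamard_mix p Z q)) (hadamard_mix p Z q) =
               Csum (fun a => Csum (fun b => Cmul (w a b) (hinner (T (Z a)) (Z b))) N) N).
  { unfold hadamard_mix. rewrite lincomb_linear, hinner_lincomb_l by auto.
    apply Csum_ext. intros a Ha. rewrite hinner_lincomb_r, <- Csum_scal.
    apply Csum_ext. intros b Hb. unfold w. cring. }
  assert (E2 : lam = Csum (fun a => Csum (fun b => Cmul (w a b) (if Nat.eqb a b then lam else C0)) N) N).
  { rewrite (Csum_ext _ (fun a => Cmul lam (RtoC (/ INR N)))).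
    - rewrite Csum_scal, Csum_RtoC, Rsum_const. replace (INR N * / INR N) with 1 by (field; auto).
      cring.
    - intros a Ha. rewrite (Csum_ext _ (fun b => if Nat.eqb b a then Cmul (w b b) lam else C0)).
      + rewrite (Csum_delta (fun b => Cmul (w b b) lam)) by auto.
        unfold w. rewrite hadamard_coef_mul_conj, hadamard_sq, Cmul_comm.
        f_equal. f_equal. unfold Rdiv, N. ring.
      + intros b Hb. destruct (Nat.eqb_spec a b), (Nat.eqb_spec b a); try lia; [subst; auto | cring]. }
  rewrite E1, E2 at 1. rewrite Csum_sub.
  rewrite (Csum_ext _ (fun a => Csum (fun b => Cmul (w a b)
       (Csub (hinner (T (Z a)) (Z b)) (if Nat.eqb a b then lam else C0))) N)).
  2: { intros a Ha. rewrite Csum_sub. apply Csum_ext. intros; cring. }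
  eapply Rle_trans; [apply Cmod_Csum|]. apply Rsum_le. intros a Ha.
  eapply Rle_trans; [apply Cmod_Csum|]. apply Rsum_le. intros b Hb.
  unfold w. rewrite !Cmod_mul, Cmod_conj, !Cmod_hadamard_coef. right.
  pose proof (sqrt_pow2_pos p). unfold N. pose proof (sqrt_sqrt (INR (2 ^ p)) (pos_INR _)) as Hs.
  set (s := sqrt (INR (2 ^ p))) in *. rewrite <- Hs. field. lra.
Qed.

Lemma hadamard_mix_diag_bound p Z (T : H -> H) lam c0 q :
  orthonormal_upto Z (2 ^ p) -> linear_op T -> (q < 2 ^ p)%nat ->
  Cmod (Csub (hinner (T (Z 0%nat)) (Z 0%nat)) lam) <= c0 ->
  (forall a b, (a < 2 ^ p)%nat -> (b < 2 ^ p)%nat -> (0 < a + b)%nat ->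
     Cmod (Csub (hinner (T (Z a)) (Z b)) (if Nat.eqb a b then lam else C0))
     <= / (INR (2 ^ p) * INR (2 ^ p))) ->
  Cmod (Csub (hinner (T (hadamard_mix p Z q)) (hadamard_mix p Z q)) lam) <= (c0 + 1) / INR (2 ^ p).
Proof.
  intros O L Hq Big Small. set (N := (2 ^ p)%nat) in *.
  assert (NP : 0 < INR N) by (apply lt_0_INR, pow2_pos).
  set (eta := / (INR N * INR N)) in *.
  assert (Heta : 0 <= eta) by (unfold eta; apply Rlt_le, Rinv_0_lt_compat; nra).
  eapply Rle_trans; [apply hadamard_mix_diag; auto|]. fold N.
  set (bound := fun a b : nat => (if Nat.eqb a 0 then if Nat.eqb b 0 then c0 else 0 else 0) + eta).
  apply Rle_trans with (Rsum (fun a => Rsum (fun b => / INR N * bound a b) N) N).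
  { apply Rsum_le. intros a Ha. apply Rsum_le. intros b Hb.
    apply Rmult_le_compat_l; [apply Rlt_le, Rinv_0_lt_compat; lra|]. unfold bound.
    destruct (Nat.eqb_spec a 0), (Nat.eqb_spec b 0); subst.
    - simpl. lra.
    - pose proof (Small 0%nat b Ha Hb ltac:(lia)). lra.
    - pose proof (Small a 0%nat Ha Hb ltac:(lia)). lra.
    - pose proof (Small a b Ha Hb ltac:(lia)). lra. }
  rewrite (Rsum_ext _ (fun a => / INR N * ((if Nat.eqb a 0 then c0 else 0) + INR N * eta))).
  2: { intros a Ha. unfold bound. rewrite Rsum_scal, Rsum_add, Rsum_const.
       destruct (Nat.eqb a 0); [rewrite Rsum_delta0 by lia | rewrite Rsum_const]; ring. }
  rewrite Rsum_scal, Rsum_add, Rsum_const, Rsum_delta0 by (apply pow2_pos).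
  right. unfold eta. field. lra.
Qed.

End HadamardMix.

(** * Construction of the basis *)

Section Perturbation.
Context {H : CHilbertSpace}.
Variable T : H -> H.
Variable C : R.
Hypothesis T_linear : linear_op T.
Hypothesis T_bound : forall v, hnorm (T v) <= C * hnorm v.

Lemma hinner_op_perturb_l (y w z : H) :
  Cmod (hinner (T w) z) <= Cmod (hinner (T y) z) + C * hnorm (hsub w y) * hnorm z.
Proof.
  destruct T_linear as [La _].
  replace w with (hadd y (hsub w y)) at 1 by apply hadd_sub_cancel.
  rewrite La, hinner_add_l.
  eapply Rle_trans; [apply Cmod_add|]. apply Rplus_le_compat_l.
  eapply Rle_trans; [apply cauchy_schwarz|].
  apply Rmult_le_compat_r; [apply hnorm_pos | apply T_bound].
Qed.

Lemma hinner_op_perturb_r (y w z : H) :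
  Cmod (hinner (T z) w) <= Cmod (hinner (T z) y) + C * hnorm z * hnorm (hsub w y).
Proof.
  replace w with (hadd y (hsub w y)) at 1 by apply hadd_sub_cancel.
  rewrite hinner_add_r.
  eapply Rle_trans; [apply Cmod_add|]. apply Rplus_le_compat_l.
  eapply Rle_trans; [apply cauchy_schwarz|].
  apply Rmult_le_compat_r; [apply hnorm_pos | apply T_bound].
Qed.

Lemma linear_op_sub (w y : H) : T (hsub w y) = hsub (T w) (T y).
Proof.
  destruct T_linear as [La Ls]. unfold hsub. rewrite La, !hopp_scal, Ls. reflexivity.
Qed.

Lemma hinner_op_perturb_diag (y w : H) (lam : complex) : hnorm y = 1 -> hnorm w = 1 ->
  Cmod (Csub (hinner (T w) w) lam) <= Cmod (Csub (hinner (T y) y) lam) + 2 * C * hnorm (hsub w y).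
Proof.
  intros Ny Nw.
  replace (Csub (hinner (T w) w) lam) with
    (Cadd (Csub (hinner (T y) y) lam)
          (Cadd (hinner (T (hsub w y)) w) (hinner (T y) (hsub w y))))
    by (rewrite linear_op_sub, hinner_sub_l, hinner_sub_r; cring).
  pose proof (Cmod_add (Csub (hinner (T y) y) lam)
                       (Cadd (hinner (T (hsub w y)) w) (hinner (T y) (hsub w y)))).
  pose proof (Cmod_add (hinner (T (hsub w y)) w) (hinner (T y) (hsub w y))).
  pose proof (cauchy_schwarz (T (hsub w y)) w). pose proof (cauchy_schwarz (T y) (hsub w y)).
  pose proof (T_bound (hsub w y)). pose proof (T_bound y). pose proof (hnorm_pos (hsub w y)).
  pose proof (hnorm_pos (T y)).
  rewrite Nw in *. rewrite Ny in *.
  assert (hnorm (T y) * hnorm (hsub w y) <= C * hnorm (hsub w y)) by nra.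
  lra.
Qed.

End Perturbation.

Section Normalize.
Context {H : CHilbertSpace}.

Definition normalize (r : H) : H := hscal (RtoC (/ hnorm r)) r.

Lemma normalize_unit (r : H) : 0 < hnorm r -> hinner (normalize r) (normalize r) = C1.
Proof.
  intros Pos. unfold normalize.
  rewrite hinner_scal_l, hinner_scal_r, hinner_self_real, <- hnorm_sq.
  apply Ceq; simpl; field; lra.
Qed.

Lemma hinner_normalize_r (y r : H) : 0 < hnorm r ->
  hinner y (normalize r) = C0 -> hinner y r = C0.
Proof.
  intros Pos E. unfold normalize in E. rewrite hinner_scal_r in E.
  replace (hinner y r) with (Cmul (RtoC (hnorm r)) (Cmul (Cconj (RtoC (/ hnorm r))) (hinner y r))).
  - rewrite E. apply Cmul_0_r.
  - destruct (hinner y r). apply Ceq; simpl; field; lra.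
Qed.

Lemma normalized_residual_close (z : nat -> H) len (y : H) th :
  orthonormal_upto z len -> hnorm y = 1 -> 0 <= th -> (INR len + 1) * th <= 1 / 2 ->
  (forall i, (i < len)%nat -> Cmod (hinner y (z i)) <= th) ->
  exists w, hinner w w = C1 /\ (forall i, (i < len)%nat -> hinner w (z i) = C0) /\
    hnorm (hsub w y) <= 2 * (INR len + 1) * th.
Proof.
  intros Oz Ny Th Small Close. set (L := INR len + 1) in *.
  set (p := orth_proj z len y). set (r := hsub y p).
  assert (NP : hnorm p <= L * th).
  { apply hnorm_le_sq; [pose proof (pos_INR len); unfold L; nra|].
    unfold p, orth_proj. rewrite lincomb_norm_sq by auto.
    apply Rle_trans with (Rsum (fun _ => th * th) len).
    - apply Rsum_le. intros i Hi. specialize (Close i Hi).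
      pose proof (Cmod_ge_0 (hinner y (z i))). nra.
    - rewrite Rsum_const. unfold L. pose proof (pos_INR len). nra. }
  assert (Pyth : hnorm p * hnorm p + hnorm r * hnorm r = 1).
  { rewrite !hnorm_sq. unfold r, p. rewrite <- orth_proj_norm_sq, <- hnorm_sq, Ny by auto. ring. }
  pose proof (hnorm_pos p). pose proof (hnorm_pos r).
  assert (NR : 0 < hnorm r) by nra.
  assert (hnorm r <= 1) by nra.
  assert (1 - hnorm r <= hnorm p) by nra.
  exists (normalize r). split; [apply normalize_unit; auto|]. split.
  - intros i Hi. unfold normalize. rewrite hinner_scal_l. unfold r, p.
    rewrite orth_proj_residual by auto. apply Cmul_0_r.
  - replace (hsub (normalize r) y) with (hsub (hscal (RtoC (/ hnorm r - 1)) r) p).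
    2: { replace y with (hadd p r) at 1 by (unfold r; apply hadd_sub_cancel).
         unfold normalize. hvec. }
    eapply Rle_trans; [apply hnorm_add|]. rewrite hnorm_opp, hnorm_scal, Cmod_RtoC.
    rewrite Rabs_right.
    + replace ((/ hnorm r - 1) * hnorm r) with (1 - hnorm r) by (field; lra). lra.
    + apply Rle_ge. apply (Rmult_le_reg_r (hnorm r)); auto. field_simplify; lra.
Qed.

End Normalize.

Definition glue {H : CHilbertSpace} (z : nat -> H) len (Z : nat -> H) : nat -> H :=
  fun i => if Nat.ltb i len then z i else Z (i - len)%nat.

Lemma glue_orthonormal {H : CHilbertSpace} (z : nat -> H) len Z N :
  orthonormal_upto z len -> orthonormal_upto Z N ->
  (forall a i, (a < N)%nat -> (i < len)%nat -> hinner (Z a) (z i) = C0) ->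
  orthonormal_upto (glue z len Z) (len + N).
Proof.
  intros Oz OZ Orth i j Hi Hj. unfold glue.
  destruct (Nat.ltb_spec i len), (Nat.ltb_spec j len).
  - apply Oz; auto.
  - rewrite hinner_conj, Orth, Cconj_0 by lia.
    destruct (Nat.eqb_spec i j); [lia | auto].
  - rewrite Orth by lia. destruct (Nat.eqb_spec i j); [lia | auto].
  - rewrite OZ by lia. destruct (Nat.eqb_spec (i - len) (j - len)), (Nat.eqb_spec i j); auto; lia.
Qed.

Lemma tolerance_exists L c eta : 1 <= L -> 0 <= c -> eta > 0 ->
  exists th, th > 0 /\ L * th <= 1 / 2 /\ th + c * L * th <= eta.
Proof.
  intros L1 Cnn Eta. assert (P : 0 < 1 + c * L) by nra.
  exists (Rmin (/ (2 * L)) (eta / (1 + c * L))). split; [|split].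
  - apply Rmin_glb_lt; [apply Rinv_0_lt_compat; lra | apply Rdiv_lt_0_compat; lra].
  - apply Rle_trans with (L * / (2 * L)); [apply Rmult_le_compat_l; [lra | apply Rmin_l]|].
    right. field. lra.
  - replace (Rmin (/ (2 * L)) (eta / (1 + c * L)) + c * L * Rmin (/ (2 * L)) (eta / (1 + c * L)))
      with ((1 + c * L) * Rmin (/ (2 * L)) (eta / (1 + c * L))) by ring.
    apply Rle_trans with ((1 + c * L) * (eta / (1 + c * L)));
      [apply Rmult_le_compat_l; [lra | apply Rmin_r]|].
    right. field. lra.
Qed.

Lemma Rdiv_le_inv_S c N m : 0 < N -> INR (S m) * c <= N -> c / N <= / INR (S m).
Proof.
  intros NP Le. assert (SM : 0 < INR (S m)) by (apply lt_0_INR; lia).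
  apply (Rmult_le_reg_r (N * INR (S m))); [nra|].
  replace (c / N * (N * INR (S m))) with (INR (S m) * c) by (field; lra).
  replace (/ INR (S m) * (N * INR (S m))) with N by (field; lra). lra.
Qed.

Lemma exists_pow2_ge X : exists p, X <= INR (2 ^ p).
Proof.
  destruct (INR_unbounded X) as [p Hp]. exists p. rewrite pow_INR.
  replace (INR 2) with 2 by (simpl; ring). pose proof (pow2_ge_INR p). lra.
Qed.

Section BasisConstruction.
Context {H : CHilbertSpace}.
Variable n : nat.
Variable T : Fin.t n -> H -> H.
Variable C : R.
Variable lam : Fin.t n -> complex.
Variable x : nat -> H.
Hypothesis C_nonneg : 0 <= C.
Hypothesis T_linear : forall j, linear_op (T j).
Hypothesis T_bound : forall j v, hnorm (T j v) <= C * hnorm v.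
Hypothesis lam_bound : forall j, Cmod (lam j) <= C.
Hypothesis x_orthonormal : orthonormal x.
Hypothesis x_diag : forall j, Ccv (fun k => hinner (T j (x k)) (x k)) (lam j).

Lemma eventually_almost_orthogonal (z : nat -> H) len th : th > 0 -> eventually (fun k =>
  (forall i, (i < len)%nat -> Cmod (hinner (x k) (z i)) < th /\
     forall j, Cmod (hinner (T j (x k)) (z i)) < th /\ Cmod (hinner (T j (z i)) (x k)) < th) /\
  (forall j, Cmod (Csub (hinner (T j (x k)) (x k)) (lam j)) < th)).
Proof.
  intros Th. apply eventually_and.
  - apply eventually_forall_lt. intros i _. apply eventually_and.
    + apply (bounded_functional_orthonormal_null (fun v => hinner v (z i)) (hnorm (z i)));
        auto using clinear_hinner_l.
      intros v. rewrite Rmult_comm. apply cauchy_schwarz.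
    + apply eventually_Fin. intros j. apply eventually_and.
      * apply (bounded_functional_orthonormal_null (fun v => hinner (T j v) (z i)) (C * hnorm (z i)));
          auto.
        -- apply (clinear_comp_linear (fun v => hinner v (z i))); auto using clinear_hinner_l.
        -- intros v. eapply Rle_trans; [apply cauchy_schwarz|]. specialize (T_bound j v).
           pose proof (hnorm_pos (z i)). nra.
      * destruct (bounded_functional_orthonormal_null (fun v => hinner v (T j (z i)))
                    (hnorm (T j (z i))) x) with (eps := th) as [N HN];
          auto using clinear_hinner_l.
        -- intros v. rewrite Rmult_comm. apply cauchy_schwarz.
        -- exists N. intros k Hk. rewrite hinner_conj, Cmod_conj. apply HN; auto.
  - apply eventually_Fin. intros j. apply (Ccv_eventually _ _ (x_diag j)); auto.
Qed.

(* A term of [x] far out is almost orthogonal to [z_0, ..., z_(len-1)] and their images; its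
   normalised residual [w] is therefore close to it and inherits its properties. *)
Lemma good_unit_vector (z : nat -> H) len eta : orthonormal_upto z len -> eta > 0 -> exists w,
  hinner w w = C1 /\ (forall i, (i < len)%nat -> hinner w (z i) = C0) /\
  forall j, Cmod (Csub (hinner (T j w) w) (lam j)) <= eta /\
    forall i, (i < len)%nat -> Cmod (hinner (T j w) (z i)) <= eta /\ Cmod (hinner (T j (z i)) w) <= eta.
Proof.
  intros Oz Eta. set (L := INR len + 1).
  assert (L1 : 1 <= L) by (unfold L; pose proof (pos_INR len); lra).
  destruct (tolerance_exists L (4 * C) eta) as [th [Th [ThL ThE]]]; [auto | lra | auto |].
  destruct (eventually_almost_orthogonal z len th Th) as [k Hk].
  destruct (Hk k (le_n k)) as [Gz Gd].
  assert (Nx : hnorm (x k) = 1) by (apply orthonormal_hnorm; auto).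
  destruct (normalized_residual_close z len (x k) th Oz Nx ltac:(lra) ThL)
    as [w [Ww [Wz Close]]]; [intros i Hi; apply Rlt_le, Gz; auto|].
  fold L in Close.
  assert (Nw : hnorm w = 1) by (apply hnorm_unit; auto).
  assert (CD : C * hnorm (hsub w (x k)) <= C * (2 * L * th)) by (apply Rmult_le_compat_l; auto).
  exists w. split; auto. split; auto. intros j. split.
  - pose proof (hinner_op_perturb_diag (T j) C (T_linear j) (T_bound j) (x k) w (lam j) Nx Nw).
    pose proof (Gd j). lra.
  - intros i Hi. destruct (proj2 (Gz i Hi) j) as [G1 G2].
    assert (Nz : hnorm (z i) = 1) by (apply hnorm_unit; rewrite Oz, Nat.eqb_refl by auto; auto).
    pose proof (hinner_op_perturb_l (T j) C (T_linear j) (T_bound j) (x k) w (z i)).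
    pose proof (hinner_op_perturb_r (T j) C (T_bound j) (x k) w (z i)).
    rewrite Nz in *. assert (0 <= C * L * th) by (apply Rmult_le_pos; [apply Rmult_le_pos|]; lra).
    split; lra.
Qed.

Lemma unit_diag_bound (w : H) j : hnorm w = 1 -> Cmod (Csub (hinner (T j w) w) (lam j)) <= 2 * C.
Proof.
  intros Nw. eapply Rle_trans; [apply Cmod_sub_tri with (b := C0)|].
  replace (Csub (hinner (T j w) w) C0) with (hinner (T j w) w) by cring.
  rewrite Cmod_sub_sym. replace (Csub (lam j) C0) with (lam j) by cring.
  pose proof (cauchy_schwarz (T j w) w). pose proof (T_bound j w). pose proof (lam_bound j).
  rewrite Nw in *. lra.
Qed.

Definition block_entry (z : nat -> H) j i i' : complex :=
  Csub (hinner (T j (z i)) (z i')) (if Nat.eqb i i' then lam j else C0).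

Lemma append_good_vectors (z : nat -> H) len eta cnt : orthonormal_upto z len -> eta > 0 ->
  exists z', (forall i, (i < len)%nat -> z' i = z i) /\ orthonormal_upto z' (len + cnt) /\
    forall i i' j, (i < len + cnt)%nat -> (i' < len + cnt)%nat -> (len <= max i i')%nat ->
      Cmod (block_entry z' j i i') <= eta.
Proof.
  intros Oz Eta. induction cnt.
  - exists z. rewrite Nat.add_0_r. split; auto. split; auto. intros; lia.
  - destruct IHcnt as [z' [Pre [O' Good]]].
    destruct (good_unit_vector z' (len + cnt) eta O' Eta) as [w [Ww [Wz Wd]]].
    set (m := (len + cnt)%nat) in *.
    exists (snoc_family z' m w). split; [|split].
    + intros i Hi. unfold snoc_family. destruct (Nat.eqb_spec i m); [lia | auto].
    + rewrite Nat.add_succ_r. apply snoc_family_orthonormal; auto.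
    + intros i i' j Hi Hi' Hmax. rewrite Nat.add_succ_r in Hi, Hi'. fold m in Hi, Hi'.
      unfold block_entry, snoc_family.
      destruct (Nat.eqb_spec i m), (Nat.eqb_spec i' m); subst.
      * rewrite Nat.eqb_refl. apply Wd.
      * replace (Nat.eqb m i') with false by (symmetry; apply Nat.eqb_neq; auto).
        replace (Csub (hinner (T j w) (z' i')) C0) with (hinner (T j w) (z' i')) by cring.
        apply Wd. lia.
      * replace (Nat.eqb i m) with false by (symmetry; apply Nat.eqb_neq; auto).
        replace (Csub (hinner (T j (z' i)) w) C0) with (hinner (T j (z' i)) w) by cring.
        apply Wd. lia.
      * apply Good; lia.
Qed.

Lemma capturing_unit_vector (z : nat -> H) len (dm : H) : orthonormal_upto z len -> exists w,
  hinner w w = C1 /\ (forall i, (i < len)%nat -> hinner w (z i) = C0) /\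
  forall y, (forall i, (i < len)%nat -> hinner y (z i) = C0) -> hinner y w = C0 -> hinner y dm = C0.
Proof.
  intros Oz. set (r := hsub dm (orth_proj z len dm)).
  assert (Py : forall y, (forall i, (i < len)%nat -> hinner y (z i) = C0) ->
                 hinner y (orth_proj z len dm) = C0)
    by (intros y Hy; apply hinner_lincomb_orth_r; auto).
  destruct (Req_dec (hnorm r) 0) as [R0|R0].
  - destruct (good_unit_vector z len 1 Oz ltac:(lra)) as [w [Ww [Wz _]]].
    exists w. split; auto. split; auto. intros y Hy _.
    apply hnorm_eq_0, hsub_eq_0 in R0. rewrite R0. auto.
  - assert (NR : 0 < hnorm r) by (pose proof (hnorm_pos r); lra).
    exists (normalize r). split; [apply normalize_unit; auto|]. split.
    + intros i Hi. unfold normalize. rewrite hinner_scal_l. unfold r.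
      rewrite orth_proj_residual by auto. apply Cmul_0_r.
    + intros y Hy Hw. apply hinner_normalize_r in Hw; auto.
      replace dm with (hadd (orth_proj z len dm) r) by (unfold r; apply hadd_sub_cancel).
      rewrite hinner_add_r, Py, Hw by auto. cring.
Qed.

Definition block_extension (z : nat -> H) len (dm : H) (m : nat) (z' : nat -> H) len' : Prop :=
  (len < len')%nat /\ (forall i, (i < len)%nat -> z' i = z i) /\ orthonormal_upto z' len' /\
  (forall y, (forall i, (i < len')%nat -> hinner y (z' i) = C0) -> hinner y dm = C0) /\
  forall i, (len <= i < len')%nat -> forall j,
    Cmod (Csub (hinner (T j (z' i)) (z' i)) (lam j)) <= / INR (S m).

(* The block is [w0] (capturing [dm]) followed by [2^p - 1] good vectors, mixed by the
   Hadamard matrix; [2^p >= (m + 1) (2 C + 1)] makes every mixed vector [1/(m+1)]-good. *)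
Lemma block_extension_exists (z : nat -> H) len (dm : H) (m : nat) : orthonormal_upto z len ->
  exists z' len', block_extension z len dm m z' len'.
Proof.
  intros Oz.
  destruct (capturing_unit_vector z len dm Oz) as [w0 [Ww [Wz Wspan]]].
  destruct (exists_pow2_ge (INR (S m) * (2 * C + 1))) as [p Hp].
  set (N := (2 ^ p)%nat) in *. pose proof (pow2_pos p) as N1. fold N in N1.
  assert (NR : 1 <= INR N) by (apply (le_INR 1); lia).
  destruct (append_good_vectors (snoc_family z len w0) (S len) (/ (INR N * INR N)) (N - 1))
    as [z2 [Pre [O2 Good]]]; [apply snoc_family_orthonormal; auto | apply Rinv_0_lt_compat; nra |].
  replace (S len + (N - 1))%nat with (len + N)%nat in O2, Good by lia.
  set (Zb := fun a => z2 (len + a)%nat).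
  assert (OZ : orthonormal_upto Zb N).
  { intros a b Ha Hb. unfold Zb. rewrite O2 by lia.
    destruct (Nat.eqb_spec a b), (Nat.eqb_spec (len + a) (len + b)); auto; lia. }
  assert (Zold : forall i, (i < len)%nat -> z2 i = z i).
  { intros i Hi. rewrite Pre by lia. unfold snoc_family. destruct (Nat.eqb_spec i len); [lia | auto]. }
  assert (Zb0 : Zb 0%nat = w0).
  { unfold Zb. rewrite Nat.add_0_r, Pre by lia. unfold snoc_family. rewrite Nat.eqb_refl. auto. }
  exists (glue z len (hadamard_mix p Zb)), (len + N)%nat.
  split; [lia|]. split; [|split; [|split]].
  - intros i Hi. unfold glue. destruct (Nat.ltb_spec i len); [auto | lia].
  - apply glue_orthonormal; auto; [apply hadamard_mix_orthonormal; auto|].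
    intros a i Ha Hi. apply hadamard_mix_orth. intros b Hb. unfold Zb. rewrite <- Zold, O2 by lia.
    destruct (Nat.eqb_spec (len + b) i); [lia | auto].
  - intros y Hy. apply Wspan.
    + intros i Hi. specialize (Hy i ltac:(lia)). unfold glue in Hy.
      destruct (Nat.ltb_spec i len); [auto | lia].
    + rewrite <- Zb0. apply (hadamard_mix_span p Zb y); [|apply pow2_pos].
      intros q Hq. specialize (Hy (len + q)%nat ltac:(fold N in Hq; lia)). unfold glue in Hy.
      destruct (Nat.ltb_spec (len + q) len); [lia|]. replace (len + q - len)%nat with q in Hy by lia.
      auto.
  - intros i Hi j. unfold glue. destruct (Nat.ltb_spec i len); [lia|].
    eapply Rle_trans.
    { apply (hadamard_mix_diag_bound p Zb (T j) (lam j) (2 * C)); auto; [lia | |].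
      - rewrite Zb0. apply unit_diag_bound, hnorm_unit, Ww.
      - intros a b Ha Hb Hab. unfold Zb.
        pose proof (Good (len + a)%nat (len + b)%nat j ltac:(lia) ltac:(lia) ltac:(lia)) as G.
        unfold block_entry in G.
        destruct (Nat.eqb_spec a b), (Nat.eqb_spec (len + a) (len + b)); auto; lia. }
    fold N. apply Rdiv_le_inv_S; [lra | exact Hp].
Qed.

Variable d : nat -> H.
Hypothesis d_dense : forall v eps, eps > 0 -> exists k, hnorm (hsub v (d k)) < eps.

Definition stage_step (s : (nat -> H) * nat) (m : nat) : (nat -> H) * nat :=
  epsilon (inhabits s) (fun s' => block_extension (fst s) (snd s) (d m) m (fst s') (snd s')).

Fixpoint stage (m : nat) : (nat -> H) * nat :=
  match m with O => (fun _ => hzero, 0%nat) | S m' => stage_step (stage m') m' end.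

Definition stage_fam m := fst (stage m).
Definition stage_len m := snd (stage m).

Lemma stage_spec m : orthonormal_upto (stage_fam m) (stage_len m) /\
  block_extension (stage_fam m) (stage_len m) (d m) m (stage_fam (S m)) (stage_len (S m)).
Proof.
  assert (Step : forall m, orthonormal_upto (stage_fam m) (stage_len m) ->
            block_extension (stage_fam m) (stage_len m) (d m) m (stage_fam (S m)) (stage_len (S m))).
  { intros m' O. unfold stage_fam, stage_len. simpl stage. unfold stage_step.
    refine (epsilon_spec _ (fun s' => block_extension (fst (stage m')) (snd (stage m'))
                                          (d m') m' (fst s') (snd s')) _).
    destruct (block_extension_exists _ _ (d m') m' O) as [z' [len' B]]. exists (z', len'). exact B. }
  induction m.
  - assert (O0 : orthonormal_upto (stage_fam 0) (stage_len 0))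
      by (intros i j Hi; unfold stage_len in Hi; simpl in Hi; lia).
    split; auto.
  - destruct IHm as [_ [_ [_ [O _]]]]. split; auto.
Qed.

Lemma stage_len_ge m : (m <= stage_len m)%nat.
Proof. induction m; [unfold stage_len; simpl; lia|]. destruct (stage_spec m) as [_ [Lt _]]. lia. Qed.

Lemma stage_len_mono s s' : (s <= s')%nat -> (stage_len s <= stage_len s')%nat.
Proof. induction 1; auto. destruct (stage_spec m) as [_ [Lt _]]. lia. Qed.

Lemma stage_prefix s s' i : (s <= s')%nat -> (i < stage_len s)%nat -> stage_fam s' i = stage_fam s i.
Proof.
  induction 1 as [|m Hle IHle]; intros Hi; auto. destruct (stage_spec m) as [_ [_ [Pre _]]].
  rewrite Pre; [apply IHle; auto|]. pose proof (stage_len_mono s m Hle). lia.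
Qed.

Definition glued_basis (k : nat) : H := stage_fam (S k) k.

Lemma glued_basis_stage k s : (k < stage_len s)%nat -> glued_basis k = stage_fam s k.
Proof.
  intros Hk. unfold glued_basis. destruct (Nat.le_gt_cases s (S k)).
  - apply stage_prefix; auto.
  - symmetry. apply stage_prefix; [lia|]. pose proof (stage_len_ge (S k)). lia.
Qed.

Lemma glued_basis_orthonormal : orthonormal glued_basis.
Proof.
  intros a b. set (s := S (max a b)). pose proof (stage_len_ge s).
  rewrite (glued_basis_stage a s), (glued_basis_stage b s) by (unfold s in *; lia).
  apply (proj1 (stage_spec s)); unfold s in *; lia.
Qed.

Lemma glued_basis_complete y : (forall k, hinner y (glued_basis k) = C0) -> y = hzero.
Proof.
  intros Hy.
  assert (Yd : forall m, hinner y (d m) = C0).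
  { intros m. destruct (stage_spec m) as [_ [_ [_ [_ [Span _]]]]]. apply Span.
    intros i Hi. rewrite <- (Hy i), (glued_basis_stage i (S m)); auto. }
  apply hnorm_eq_0, Rle_antisym; [|apply hnorm_pos].
  apply Rle_plus_epsilon. intros e He.
  destruct (d_dense y (e / 2)) as [m Hm]; [lra|].
  (* [|y|^2 = <y, y - d m> <= |y| |y - d m|] *)
  assert (E : hinner y y = hinner y (hsub y (d m))) by (rewrite hinner_sub_r, Yd; cring).
  pose proof (hnorm_sq y) as Sq. rewrite E in Sq.
  pose proof (cauchy_schwarz y (hsub y (d m))). pose proof (Re_le_Cmod (hinner y (hsub y (d m)))).
  pose proof (Rle_abs (Re (hinner y (hsub y (d m))))). pose proof (hnorm_pos y).
  pose proof (hnorm_pos (hsub y (d m))).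
  destruct (Rle_or_lt (hnorm y) (e / 2)); [lra|].
  assert (hnorm y * hnorm y <= hnorm y * (e / 2)) by nra.
  nra.
Qed.

Lemma stage_containing k s0 : (stage_len s0 <= k)%nat ->
  exists r, (s0 <= r)%nat /\ (stage_len r <= k < stage_len (S r))%nat.
Proof.
  intros Hk.
  assert (Gen : forall t, (k < stage_len (s0 + t))%nat ->
            exists r, (s0 <= r)%nat /\ (stage_len r <= k < stage_len (S r))%nat).
  { induction t; intros Ht; [rewrite Nat.add_0_r in Ht; lia|].
    destruct (Nat.lt_ge_cases k (stage_len (s0 + t))); [apply IHt; auto|].
    exists (s0 + t)%nat. rewrite <- Nat.add_succ_r. split; [lia | auto]. }
  apply (Gen (S k)). pose proof (stage_len_ge (s0 + S k)). lia.
Qed.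

Lemma glued_basis_diag j eps : eps > 0 ->
  eventually (fun k => Cmod (Csub (hinner (T j (glued_basis k)) (glued_basis k)) (lam j)) <= eps).
Proof.
  intros He. destruct (INR_unbounded (/ eps)) as [m0 Hm0].
  exists (stage_len m0). intros k Hk. destruct (stage_containing k m0 Hk) as [r [Hr [K1 K2]]].
  destruct (stage_spec r) as [_ [_ [_ [_ [_ Good]]]]].
  rewrite (glued_basis_stage k (S r)) by auto. eapply Rle_trans; [apply Good; auto|].
  pose proof (le_INR m0 (S r) ltac:(lia)).
  assert (0 < INR (S r)) by (apply lt_0_INR; lia).
  rewrite <- (Rinv_inv eps). apply Rinv_le_contravar; [apply Rinv_0_lt_compat|]; lra.
Qed.

End BasisConstruction.

Lemma Fin_common_bound (n : nat) (P : Fin.t n -> R -> Prop) :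
  (forall j c c', c <= c' -> P j c -> P j c') -> (forall j, exists c, P j c) -> exists c, forall j, P j c.
Proof.
  induction n; intros Mono Hj.
  - exists 0. intros j. apply Fin.case0. exact j.
  - destruct (IHn (fun j c => P (Fin.FS j) c)) as [c1 H1]; [intros; eapply Mono; eauto | intros j; apply Hj|].
    destruct (Hj Fin.F1) as [c2 H2].
    exists (Rmax c1 c2). intros j. apply (Fin.caseS' j (fun j => P j (Rmax c1 c2))).
    + eapply Mono; [apply Rmax_r | auto].
    + intros j0. eapply Mono; [apply Rmax_l | auto].
Qed.

Lemma tuple_uniform_bound {H : CHilbertSpace} (n : nat) (T : Fin.t n -> H -> H) (lam : Fin.t n -> complex) :
  (forall j, bounded_op (T j)) -> exists C, 0 <= C /\
    (forall j v, hnorm (T j v) <= C * hnorm v) /\ (forall j, Cmod (lam j) <= C).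
Proof.
  intros HT.
  destruct (Fin_common_bound n (fun j c => 0 <= c /\ (forall v, hnorm (T j v) <= c * hnorm v) /\
                                           Cmod (lam j) <= c)) as [C HC].
  - intros j c c' Hc [P1 [P2 P3]]. split; [lra|]. split; [|lra].
    intros v. specialize (P2 v). pose proof (hnorm_pos v). nra.
  - intros j. destruct (HT j) as [_ [M HM]]. exists (Rmax 0 (Rmax M (Cmod (lam j)))).
    pose proof (Rmax_l 0 (Rmax M (Cmod (lam j)))). pose proof (Rmax_r 0 (Rmax M (Cmod (lam j)))).
    pose proof (Rmax_l M (Cmod (lam j))). pose proof (Rmax_r M (Cmod (lam j))).
    split; [lra|]. split; [|lra]. intros v. specialize (HM v). pose proof (hnorm_pos v). nra.
  - exists (Rmax 0 C). pose proof (Rmax_l 0 C). pose proof (Rmax_r 0 C).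
    split; [auto|]. split.
    + intros j v. destruct (HC j) as [_ [h _]]. pose proof (hnorm_pos v).
      eapply Rle_trans; [apply h | apply Rmult_le_compat_r; auto].
    + intros j. destruct (HC j) as [_ [_ h]]. lra.
Qed.

Lemma compact_D_const_of_ess_num_range (H : CHilbertSpace) (Hsep : separable H) (n : nat)
  (T : Fin.t n -> H -> H) (HT : forall j, bounded_op (T j)) lam :
  ess_num_range T lam -> exists K, (forall j, compact_op (K j)) /\ D_const (tuple_add T K) lam.
Proof.
  intros [x [Ox Xc]]. destruct Hsep as [d Dd].
  destruct (tuple_uniform_bound n T lam HT) as [C [Cnn [TB LB]]].
  assert (TL : forall j, linear_op (T j)) by (intros j; apply HT).
  set (u := glued_basis n T lam d).
  assert (Ou : orthonormal u) by exact (glued_basis_orthonormal n T C lam x Cnn TL TB LB Ox Xc d).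
  assert (Kex : forall j : Fin.t n, exists K : H -> H, compact_op K /\
                  forall k, K (u k) = hscal (Csub (lam j) (hinner (T j (u k)) (u k))) (u k)).
  { intros j. apply compact_diagonal_op_exists; auto. intros e He.
    destruct (glued_basis_diag n T C lam x Cnn TL TB LB Ox Xc d j e He) as [N HN].
    exists N. intros k Hk. rewrite Cmod_sub_sym. apply HN; auto. }
  destruct (choice _ Kex) as [K HK].
  exists K. split; [intros j; apply HK|].
  exists u. split; [split; [auto | exact (glued_basis_complete n T C lam x Cnn TL TB LB Ox Xc d Dd)]|].
  intros k j. unfold tuple_add. rewrite hinner_add_l, (proj2 (HK j)), hinner_scal_l, Ou, Nat.eqb_refl.
  cring.
Qed.

Theorem proposition5p3 (H : CHilbertSpace)
  (Hsep : separable H) (Hinf : infinite_dimensional H)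
  (n : nat) (T : Fin.t n -> H -> H) (HT : forall j, bounded_op (T j)) :
  forall lam : Fin.t n -> complex,
    (exists K : Fin.t n -> H -> H,
        (forall j, compact_op (K j)) /\ D_const (tuple_add T K) lam)
    <-> ess_num_range T lam.
Proof.
  intros lam. split.
  - intros [K [Kc D]]. exact (ess_num_range_of_compact_D_const H n T K lam Kc D).
  - exact (compact_D_const_of_ess_num_range H Hsep n T HT lam).
Qed.
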